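(* For each $d\in\{\delta,\delta^*,\partial\}$, the logic $\mathbf{DL}(d)$ can simulate $\mathbf{DL}(\partial^* )$ with respect to addition of facts. Explicitly, for every defeasible theory $D$ there is a defeasible theory $D'$ with the following property. For every theory $A=(F_A,\emptyset,\emptyset)$ consisting only of facts that is modular with respect to $D$ and $D'$, and for every literal $q\in\Sigma(D+A)$: - $D+A\vdash+\partial^*q$ iff $D'+A\vdash +d\,q$, and - $D+A\vdash-\partial^*q$ iff $D'+A\vdash -d\,q$.
   Context: Defeasible theories. Literals come from a language closed under negation. For a literal $q$, its complement ${\sim}q$ is $\neg p$ if $q=p$ is a proposition, and $p$ if $q=\neg p$. A defeasible theory $D=(F,R,>)$ consists of: - a set $F$ of literals (the facts); - a finite set $R$ of rules, each with a distinct label; - an acyclic binary relation $>$ on labels (the superiority relation). Each rule $r$ has a finite set $A(r)$ of body literals and a head literal. A rule is one of: - strict, written $A(r)\rightarrow q$; - defeasible, written $A(r)\Rightarrow q$; - a defeater, written $A(r)\leadsto q$. Notation: $R_s$ is the set of strict rules, $R_{sd}$ the set of strict or defeasible rules, and $R[q]$, $R_s[q]$, $R_{sd}[q]$ are the corresponding sets of rules with head $q$. $\Sigma(D)$ and $\Lambda(D)$ are the literals and the labels occurring in $D$. Conclusions. Conclusions have the form $+d\,q$ or $-d\,q$ for a tag $d\in\{\Delta,\partial,\partial^*,\delta,\sigma,\delta^*,\sigma^*\}$. Given $D$, an operator $\mathcal T_D$ maps sets $E$ of conclusions to sets of conclusions. The conclusions of $D$ are $\bigcup_n\mathcal T_D\uparrow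 n$, where $\mathcal T_D\uparrow 0=\emptyset$ and $\mathcal T_D\uparrow(n+1)=\mathcal T_D(\mathcal T_D\uparrow n)$. We write $D\vdash\alpha$ when $\alpha$ is a conclusion of $D$. For a set $B$ of literals, ''$+dB\subseteq E$'' means $+d\,a\in E$ for all $a\in B$. The operator $\mathcal T_D$ is defined by the following clauses. $+\Delta q\in\mathcal T_D(E)$ iff $q\in F$, or there is $r\in R_s[q]$ with $+\Delta A(r)\subseteq E$. $-\Delta q\in\mathcal T_D(E)$ iff $q\notin F$ and every $r\in R_s[q]$ has some $a\in A(r)$ with $-\Delta a\in E$. $+\partial q\in\mathcal T_D(E)$ iff either $+\Delta q\in E$, or all of the following hold: - some $r\in R_{sd}[q]$ has $+\partial A(r)\subseteq E$; - $-\Delta{\sim}q\in E$; - every $s\in R[{\sim}q]$ either has some $a\in A(s)$ with $-\partial a\in E$, or there is $t\in R_{sd}[q]$ with $+\partial A(t)\subseteq E$ and $t>s$. $-\partial q\in\mathcal T_D(E)$ iff $-\Delta q\in E$ and one of the following holds: - every $r\in R_{sd}[q]$ has some $a\in A(r)$ with $-\partial a\in E$; - $+\Delta{\sim}q\in E$; - some $s\in R[{\sim}q]$ has $+\partial A(s)\subseteq E$ and every $t\in R_{sd}[q]$ either has some $a\in A(t)$ with $-\partial a\in E$ or satisfies not $t>s$. $+\partial^*q\in\mathcal T_D(E)$ iff either $+\Delta q\in E$, or there is $r\in R_{sd}[q]$ such that: - $+\partial^*A(r)\subseteq E$; - $-\Delta{\sim}q\in E$; - every $s\in R[{\sim}q]$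 either has some $a\in A(s)$ with $-\partial^*a\in E$, or satisfies $r>s$. $-\partial^*q\in\mathcal T_D(E)$ iff $-\Delta q\in E$ and every $r\in R_{sd}[q]$ satisfies one of: - some $a\in A(r)$ has $-\partial^*a\in E$; - $+\Delta{\sim}q\in E$; - some $s\in R[{\sim}q]$ has $+\partial^*A(s)\subseteq E$ and not $r>s$. $\pm\delta$ are defined exactly as $\pm\partial$, with $\partial$ replaced by $\delta$, with two exceptions. In the $+\delta$ clause, the escape for $s$ is ''some $a\in A(s)$ has $-\sigma a\in E$''. In the $-\delta$ clause, the condition on $s$ is ''$+\sigma A(s)\subseteq E$''. $+\sigma q\in\mathcal T_D(E)$ iff either $+\Delta q\in E$, or there is $r\in R_{sd}[q]$ with $+\sigma A(r)\subseteq E$ such that every $s\in R[{\sim}q]$ either has some $a\in A(s)$ with $-\delta a\in E$ or satisfies not $s>r$. $-\sigma q\in\mathcal T_D(E)$ iff $-\Delta q\in E$ and every $r\in R_{sd}[q]$ either has some $a\in A(r)$ with $-\sigma a\in E$, or there is $s\in R[{\sim}q]$ with $+\delta A(s)\subseteq E$ and $s>r$. $\pm\delta^*$ are defined exactly as $\pm\partial^*$, with $\partial^*$ replaced by $\delta^*$, with two exceptions. In the $+\delta^*$ clause, the escape for $s$ is ''some $a\in A(s)$ has $-\sigma^*a\in E$''. In the $-\delta^*$ clause, the condition on $s$ is ''$+\sigma^*A(s)\subseteq E$''. $\pm\sigma^*$ are defined exactly as $\pm\sigma$, with $\sigma,\delta$ replaced by $\sigma^*,\delta^*$ respectively. The logic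 $\mathbf{DL}(d)$, for $d\in\{\partial,\partial^*,\delta,\delta^*\}$, has principal tag $d$. Addition. For theories $D=(F,R,>)$ and $A=(F',R',>')$ with disjoint label sets, define $D+A=(F\cup F',R\cup R',>\cup>')$. Given theories $D_1,D_2$, an addition $A$ is modular if - $\Sigma(A)\cap\Sigma(D_2)\subseteq\Sigma(D_1)$, - $\Lambda(D_1)\cap\Lambda(A)=\emptyset$, and - $\Lambda(D_2)\cap\Lambda(A)=\emptyset$. Simulation. $L_1$ (principal tag $d_1$) can be simulated by $L_2$ (principal tag $d_2$) with respect to addition of facts if every theory $D_1$ has a theory $D_2$ such that, for every modular addition $A$ of the form $(F,\emptyset,\emptyset)$ and every $q\in\Sigma(D_1+A)$: - $D_1+A\vdash\pm d_1q$ in $L_1$ iff $D_2+A\vdash\pm d_2 q$ in $L_2$ (same sign). *)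

From Stdlib Require Import List Relations.
Import ListNotations.

(* Propositions are indexed by nat (an infinite supply, so that simulating
   theories may use fresh propositions); labels are nats as well. *)
Definition atom := nat.
Definition label := nat.

Inductive literal : Type := Pos (p : atom) | Neg (p : atom).

Definition compl (q : literal) : literal :=
  match q with Pos p => Neg p | Neg p => Pos p end.

Inductive rkind : Type := Strict | Defeasible | Defeater.

Record rule : Type := mkRule {
  rlabel : label;
  rbody : list literal;
  rhead : literal;
  rkindof : rkind }.

(* D = (F, R, >) ; facts, rules (a finite set given as a list), superiority
   relation given by its (finite) list of pairs (t, s) meaning t > s. *)
Record theory : Type := mkTheory {
  facts : list literal;
  rules : list rule;
  sup : list (label * label) }.

Definition sup_rel (D : theory) : relation label := fun t s => In (t, s) (sup D).
Definition gt (D : theory) (t s : rule) : Prop := sup_rel D (rlabel t) (rlabel s).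

Definition wf_theory (D : theory) : Prop :=
  NoDup (map rlabel (rules D)) /\
  (forall l, ~ clos_trans label (sup_rel D) l l).

Definition in_R (D : theory) (q : literal) (r : rule) : Prop :=
  In r (rules D) /\ rhead r = q.
Definition in_Rs (D : theory) (q : literal) (r : rule) : Prop :=
  in_R D q r /\ rkindof r = Strict.
Definition in_Rsd (D : theory) (q : literal) (r : rule) : Prop :=
  in_R D q r /\ (rkindof r = Strict \/ rkindof r = Defeasible).

(* tags: Delta, partial, partial*, delta, sigma, delta*, sigma* *)
Inductive tag : Type :=
  TDelta | TPartial | TPartialStar | TDelta_ | TSigma | TDeltaStar | TSigmaStar.
Inductive sign : Type := Plus | Minus.

Definition conclusion : Type := (sign * tag * literal)%type.
Definition cset : Type := conclusion -> Prop.

Definition all_plus (E : cset) (d : tag) (B : list literal) : Prop :=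
  forall a, In a B -> E (Plus, d, a).
Definition some_minus (E : cset) (d : tag) (B : list literal) : Prop :=
  exists a, In a B /\ E (Minus, d, a).

(* Generic +∂-style clause (d = main tag, esc = tag of the escape for s).
   For ∂: esc = ∂.  For δ: esc = σ. *)
Definition plus_amb (d esc : tag) (D : theory) (E : cset) (q : literal) : Prop :=
  E (Plus, TDelta, q) \/
  ((exists r, in_Rsd D q r /\ all_plus E d (rbody r)) /\
   E (Minus, TDelta, compl q) /\
   (forall s, in_R D (compl q) s ->
      some_minus E esc (rbody s) \/
      exists t, in_Rsd D q t /\ all_plus E d (rbody t) /\ gt D t s)).

Definition minus_amb (d cond : tag) (D : theory) (E : cset) (q : literal) : Prop :=
  E (Minus, TDelta, q) /\
  ((forall r, in_Rsd D q r -> some_minus E d (rbody r)) \/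
   E (Plus, TDelta, compl q) \/
   (exists s, in_R D (compl q) s /\ all_plus E cond (rbody s) /\
      forall t, in_Rsd D q t -> some_minus E d (rbody t) \/ ~ gt D t s)).

Definition plus_star (d esc : tag) (D : theory) (E : cset) (q : literal) : Prop :=
  E (Plus, TDelta, q) \/
  exists r, in_Rsd D q r /\ all_plus E d (rbody r) /\
    E (Minus, TDelta, compl q) /\
    (forall s, in_R D (compl q) s -> some_minus E esc (rbody s) \/ gt D r s).

Definition minus_star (d cond : tag) (D : theory) (E : cset) (q : literal) : Prop :=
  E (Minus, TDelta, q) /\
  forall r, in_Rsd D q r ->
    some_minus E d (rbody r) \/
    E (Plus, TDelta, compl q) \/
    exists s, in_R D (compl q) s /\ all_plus E cond (rbody s) /\ ~ gt D r s.

Definition plus_sig (s dl : tag) (D : theory) (E : cset) (q : literal) : Prop :=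
  E (Plus, TDelta, q) \/
  exists r, in_Rsd D q r /\ all_plus E s (rbody r) /\
    forall s', in_R D (compl q) s' -> some_minus E dl (rbody s') \/ ~ gt D s' r.

Definition minus_sig (s dl : tag) (D : theory) (E : cset) (q : literal) : Prop :=
  E (Minus, TDelta, q) /\
  forall r, in_Rsd D q r ->
    some_minus E s (rbody r) \/
    exists s', in_R D (compl q) s' /\ all_plus E dl (rbody s') /\ gt D s' r.

Definition T (D : theory) (E : cset) (c : conclusion) : Prop :=
  match c with
  | (Plus, TDelta, q) =>
      In q (facts D) \/ exists r, in_Rs D q r /\ all_plus E TDelta (rbody r)
  | (Minus, TDelta, q) =>
      ~ In q (facts D) /\ forall r, in_Rs D q r -> some_minus E TDelta (rbody r)
  | (Plus, TPartial, q) => plus_amb TPartial TPartial D E q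
  | (Minus, TPartial, q) => minus_amb TPartial TPartial D E q
  | (Plus, TPartialStar, q) => plus_star TPartialStar TPartialStar D E q
  | (Minus, TPartialStar, q) => minus_star TPartialStar TPartialStar D E q
  | (Plus, TDelta_, q) => plus_amb TDelta_ TSigma D E q
  | (Minus, TDelta_, q) => minus_amb TDelta_ TSigma D E q
  | (Plus, TSigma, q) => plus_sig TSigma TDelta_ D E q
  | (Minus, TSigma, q) => minus_sig TSigma TDelta_ D E q
  | (Plus, TDeltaStar, q) => plus_star TDeltaStar TSigmaStar D E q
  | (Minus, TDeltaStar, q) => minus_star TDeltaStar TSigmaStar D E q
  | (Plus, TSigmaStar, q) => plus_sig TSigmaStar TDeltaStar D E q
  | (Minus, TSigmaStar, q) => minus_sig TSigmaStar TDeltaStar D E q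
  end.

Fixpoint iterT (D : theory) (n : nat) : cset :=
  match n with
  | 0 => fun _ => False
  | S n' => T D (iterT D n')
  end.

Definition derives (D : theory) (c : conclusion) : Prop := exists n, iterT D n c.

Definition in_Sigma (D : theory) (q : literal) : Prop :=
  In q (facts D) \/
  exists r, In r (rules D) /\ (rhead r = q \/ In q (rbody r)).

Definition in_Lambda (D : theory) (l : label) : Prop :=
  (exists r, In r (rules D) /\ rlabel r = l) \/
  (exists l', In (l, l') (sup D) \/ In (l', l) (sup D)).

Definition add (D A : theory) : theory :=
  mkTheory (facts D ++ facts A) (rules D ++ rules A) (sup D ++ sup A).

Definition modular (D1 D2 A : theory) : Prop :=
  (forall q, in_Sigma A q -> in_Sigma D2 q -> in_Sigma D1 q) /\
  (forall l, ~ (in_Lambda D1 l /\ in_Lambda A l)) /\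
  (forall l, ~ (in_Lambda D2 l /\ in_Lambda A l)).

Definition fact_theory (F : list literal) : theory := mkTheory F [] [].

From Stdlib Require Import List Relations Lia Arith Classical Cantor.
Import ListNotations.

(* The simulating theory D' keeps the strict rules of D and describes
   ∂*-provability with fresh literals: for a literal a of D, [delta_lit a]
   copies +Δa, [nodelta_lit a] records -Δ~a and [star_lit a] stands for +∂*a;
   for a rule r, [win_lit r] says that r has a ∂*-provable body and that every
   attacker not inferior to r has a refuted body.  A body-less defeater that
   wins against [a → delta_lit a] makes [delta_lit a] provable only
   definitely.  The other fresh literals are guarded: their opponents are
   defeaters beating all of their rules.  For such a literal the clauses of ∂,
   of δ/σ and of δ*/σ* all collapse to "some rule has a provable body and every
   opposing defeater has a refuted body", so under each of these tags the fresh
   literals evaluate the ∂* conditions verbatim.  Defeasibly, a literal a of D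
   is supported only by [star_lit a ⇒ a], the one rule stronger than the
   body-less defeater [⇝ ~a].  Modularity keeps the
   facts A off the fresh literals, since a guard rule mentions all of them. *)

Lemma compl_involutive (a : literal) : compl (compl a) = a.
Proof. now destruct a. Qed.

Lemma compl_inj (a b : literal) : compl a = compl b -> a = b.
Proof. intros h; now rewrite <- (compl_involutive a), h, compl_involutive. Qed.

Definition literal_eq_dec (a b : literal) : {a = b} + {a <> b}.
Proof. decide equality; apply Nat.eq_dec. Defined.

Definition rkind_eq_dec (a b : rkind) : {a = b} + {a <> b}.
Proof. decide equality. Defined.

Definition rule_eq_dec (a b : rule) : {a = b} + {a <> b}.
Proof.
  decide equality;
    auto using rkind_eq_dec, literal_eq_dec, Nat.eq_dec, list_eq_dec.
Defined.

(** * Locality and the fixpoint property of [T] *)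

Definition incl_on (B : list literal) (E E' : cset) : Prop :=
  forall s t x, In x B -> E (s, t, x) -> E' (s, t, x).

Definition support (Th : theory) (q : literal) : list literal :=
  q :: compl q :: flat_map rbody (rules Th).

Section Locality.
Variables (Th : theory) (E E' : cset) (q : literal).
Hypothesis HE : incl_on (support Th q) E E'.

Let E_q s t : E (s, t, q) -> E' (s, t, q).
Proof. apply HE; left; reflexivity. Qed.

Let E_compl s t : E (s, t, compl q) -> E' (s, t, compl q).
Proof. apply HE; right; left; reflexivity. Qed.

Let E_body r a s t : In r (rules Th) -> In a (rbody r) -> E (s, t, a) -> E' (s, t, a).
Proof. intros hr ha; apply HE; right; right; apply in_flat_map; eauto. Qed.

Let all_plus_body r d : In r (rules Th) -> all_plus E d (rbody r) -> all_plus E' d (rbody r).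
Proof. intros hr h a ha; eapply E_body; eauto. Qed.

Let some_minus_body r d : In r (rules Th) -> some_minus E d (rbody r) -> some_minus E' d (rbody r).
Proof. intros hr [a [ha h]]; exists a; split; [|eapply E_body]; eauto. Qed.

Let in_R_rules x r : in_R Th x r -> In r (rules Th).
Proof. now intros []. Qed.

Let in_Rsd_rules x r : in_Rsd Th x r -> In r (rules Th).
Proof. now intros [[] ]. Qed.

Let in_Rs_rules x r : in_Rs Th x r -> In r (rules Th).
Proof. now intros [[] ]. Qed.

Local Hint Resolve in_Rs_rules E_q E_compl all_plus_body some_minus_body in_R_rules in_Rsd_rules : core.

Ltac local_tac :=
  repeat match goal with
  | h : _ /\ _ |- _ => destruct h
  | h : exists _, _ |- _ => destruct h
  | |- _ /\ _ => split
  end; eauto 6.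

Lemma plus_amb_local d e : plus_amb d e Th E q -> plus_amb d e Th E' q.
Proof.
  intros [h | [[r [hr h1]] [h2 h3]]]; [left; auto | right].
  split; [exists r; local_tac | split; [auto|]].
  intros s hs; destruct (h3 s hs) as [h | [t ht]]; [left | right; exists t]; local_tac.
Qed.

Lemma minus_amb_local d e : minus_amb d e Th E q -> minus_amb d e Th E' q.
Proof.
  intros [h0 [h | [h | [s [hs [h1 h2]]]]]]; split; auto.
  - left; intros r hr; specialize (h r hr); local_tac.
  - right; right; exists s; split; [|split]; [auto|local_tac|].
    intros t ht; destruct (h2 t ht); [left|right]; local_tac.
Qed.

Lemma plus_star_local d e : plus_star d e Th E q -> plus_star d e Th E' q.
Proof.
  intros [h | [r [hr [h1 [h2 h3]]]]]; [left; auto | right; exists r].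
  split; [|split; [|split]]; auto; [local_tac|].
  intros s hs; destruct (h3 s hs); [left|right]; local_tac.
Qed.

Lemma minus_star_local d e : minus_star d e Th E q -> minus_star d e Th E' q.
Proof.
  intros [h0 h]; split; auto.
  intros r hr; destruct (h r hr) as [h1 | [h1 | [s [hs [h1 h2]]]]].
  - left; local_tac.
  - right; left; auto.
  - right; right; exists s; local_tac.
Qed.

Lemma plus_sig_local d e : plus_sig d e Th E q -> plus_sig d e Th E' q.
Proof.
  intros [h | [r [hr [h1 h2]]]]; [left; auto | right; exists r].
  split; [|split]; auto; [local_tac|].
  intros s hs; destruct (h2 s hs); [left|right]; local_tac.
Qed.

Lemma minus_sig_local d e : minus_sig d e Th E q -> minus_sig d e Th E' q.
Proof.
  intros [h0 h]; split; auto.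
  intros r hr; destruct (h r hr) as [h1 | [s [hs [h1 h2]]]].
  - left; local_tac.
  - right; exists s; local_tac.
Qed.

Lemma T_local s t : T Th E (s, t, q) -> T Th E' (s, t, q).
Proof.
  destruct s, t; cbn [T];
    auto using plus_amb_local, minus_amb_local, plus_star_local, minus_star_local,
      plus_sig_local, minus_sig_local.
  - intros [h | [r [hr h]]]; [left | right; exists r]; local_tac.
  - intros [h1 h2]; split; auto; intros r hr; specialize (h2 r hr); local_tac.
Qed.

End Locality.

Lemma T_mono Th (E E' : cset) c : (forall c, E c -> E' c) -> T Th E c -> T Th E' c.
Proof. destruct c as [[s t] q]; intros h; apply T_local; intros ? ? ? _; apply h. Qed.

Lemma iterT_mono Th n m c : n <= m -> iterT Th n c -> iterT Th m c.
Proof.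
  intros hnm; revert m hnm c; induction n as [|n IH]; intros m hnm c; [contradiction|].
  destruct m as [|m]; [lia|]; apply T_mono; intros c'; apply IH; lia.
Qed.

Lemma derives_stage Th (cs : list conclusion) :
  exists n, forall c, In c cs -> derives Th c -> iterT Th n c.
Proof.
  induction cs as [|c cs [n IH]]; [exists 0; contradiction|].
  destruct (classic (derives Th c)) as [[m hm] | hc].
  - exists (max m n); intros c' [<- | hc'] h';
      [apply (iterT_mono _ m) | apply (iterT_mono _ n)]; auto; lia.
  - exists n; intros c' [<- | hc'] h'; [contradiction|auto].
Qed.

Definition all_tags : list tag :=
  [TDelta; TPartial; TPartialStar; TDelta_; TSigma; TDeltaStar; TSigmaStar].

Lemma derives_of_T Th c : T Th (derives Th) c -> derives Th c.
Proof.
  destruct c as [[s t] q]; intros h.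
  destruct (derives_stage Th (list_prod (list_prod [Plus; Minus] all_tags) (support Th q)))
    as [n hn].
  exists (S n); revert h; apply T_local.
  intros s' t' x hx; apply hn, in_prod; [apply in_prod|exact hx].
  - destruct s'; simpl; auto.
  - destruct t'; simpl; tauto.
Qed.

Lemma T_of_derives Th c : derives Th c -> T Th (derives Th) c.
Proof. intros [[|n] h]; [contradiction|]; revert h; apply T_mono; intros c' h; now exists n. Qed.

Lemma plus_of_delta Th E y u : u <> TDelta -> E (Plus, TDelta, y) -> T Th E (Plus, u, y).
Proof. intros hu h; destruct u; cbn [T]; try (left; auto); congruence. Qed.

Lemma delta_of_minus Th E y u : u <> TDelta -> T Th E (Minus, u, y) -> E (Minus, TDelta, y).
Proof. intros hu; destruct u; cbn [T]; try (intros [h _]; auto); congruence. Qed.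

Lemma in_R_add_facts Th F q r : in_R (add Th (fact_theory F)) q r <-> in_R Th q r.
Proof. unfold in_R; cbn [rules add fact_theory]; now rewrite app_nil_r. Qed.

Lemma in_Rsd_add_facts Th F q r : in_Rsd (add Th (fact_theory F)) q r <-> in_Rsd Th q r.
Proof. unfold in_Rsd; now rewrite in_R_add_facts. Qed.

Lemma in_Rs_add_facts Th F q r : in_Rs (add Th (fact_theory F)) q r <-> in_Rs Th q r.
Proof. unfold in_Rs; now rewrite in_R_add_facts. Qed.

Lemma gt_add_facts Th F r s : gt (add Th (fact_theory F)) r s <-> gt Th r s.
Proof. unfold gt, sup_rel; cbn [sup add fact_theory]; now rewrite app_nil_r. Qed.

Lemma wf_add_facts Th F : wf_theory Th -> wf_theory (add Th (fact_theory F)).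
Proof. unfold wf_theory, sup_rel; cbn [rules sup add fact_theory]; now rewrite !app_nil_r. Qed.

Lemma gt_asym Th r s : wf_theory Th -> gt Th r s -> ~ gt Th s r.
Proof. intros [_ hacyc] h1 h2; apply (hacyc (rlabel r)); eapply t_trans; apply t_step; eauto. Qed.

Lemma in_Sigma_add_facts Th F q : in_Sigma (add Th (fact_theory F)) q -> ~ In q F -> in_Sigma Th q.
Proof.
  unfold in_Sigma; cbn [facts rules add fact_theory]; rewrite app_nil_r.
  intros [h | h] hq; [apply in_app_or in h as [h | h] |]; tauto.
Qed.

Lemma no_minus_of_fact Th q u : In q (facts Th) -> ~ derives Th (Minus, u, q).
Proof.
  intros hq h; assert (hd : derives Th (Minus, TDelta, q)).
  { destruct u; auto; apply T_of_derives in h; eapply delta_of_minus; eauto; discriminate. }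
  now apply T_of_derives in hd as [hf _].
Qed.

(** * Sufficient conditions for [±∂*] *)

Definition wins (Th : theory) (r : rule) : Prop :=
  all_plus (derives Th) TPartialStar (rbody r) /\
  forall s, in_R Th (compl (rhead r)) s -> ~ gt Th r s ->
    some_minus (derives Th) TPartialStar (rbody s).

Definition loses (Th : theory) (r : rule) : Prop :=
  some_minus (derives Th) TPartialStar (rbody r) \/
  exists s, in_R Th (compl (rhead r)) s /\ ~ gt Th r s /\
    all_plus (derives Th) TPartialStar (rbody s).

Section PartialStar.
Variable Th : theory.

Lemma star_of_delta a : derives Th (Plus, TDelta, a) -> derives Th (Plus, TPartialStar, a).
Proof. intros h; apply derives_of_T; now left. Qed.

Lemma star_of_wins r : in_Rsd Th (rhead r) r -> wins Th r ->
  derives Th (Minus, TDelta, compl (rhead r)) -> derives Th (Plus, TPartialStar, rhead r).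
Proof.
  intros hr [w1 w2] hd; apply derives_of_T; right; exists r; do 3 (split; auto).
  intros s hs; destruct (classic (gt Th r s)); auto.
Qed.

Lemma neg_star_of_loses a : derives Th (Minus, TDelta, a) ->
  (forall r, in_Rsd Th a r -> derives Th (Plus, TDelta, compl a) \/ loses Th r) ->
  derives Th (Minus, TPartialStar, a).
Proof.
  intros hd h; apply derives_of_T; split; auto.
  intros r hr; destruct (h r hr) as [x | [x | [s [hs [hg x]]]]]; auto.
  right; right; exists s; destruct hr as [[_ <-] _]; auto.
Qed.

Lemma neg_star_of_compl a : wf_theory Th -> derives Th (Minus, TDelta, a) ->
  derives Th (Plus, TPartialStar, compl a) -> derives Th (Minus, TPartialStar, a).
Proof.
  intros wf hd hp; apply T_of_derives in hp as [hp | [r [hr [hb [hdn hs]]]]].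
  - apply derives_of_T; split; auto; intros r _; now right; left.
  - rewrite compl_involutive in hdn, hs; apply derives_of_T; split; auto.
    intros t [ht _]; destruct (hs t ht) as [x | x]; [now left|].
    right; right; exists r; split; [now destruct hr|split; auto].
    now apply gt_asym.
Qed.

End PartialStar.

(** * Guarded, blocked and projected literals *)

Definition companion (d e : tag) : Prop :=
  (d = TDelta_ /\ e = TSigma) \/ (d = TDeltaStar /\ e = TSigmaStar) \/
  (d = TPartial /\ e = TPartial).

Definition dual_pair (d e u v : tag) : Prop := (u = d /\ v = e) \/ (u = e /\ v = d).

Record guarded (Th : theory) (x : literal) : Prop := {
  guarded_kind : forall t, in_R Th x t -> rkindof t = Defeasible;
  guarded_beaten : forall t s, in_R Th x t -> in_R Th (compl x) s -> gt Th s t;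
  guarded_unbeating : forall t s, in_R Th x t -> in_R Th (compl x) s -> ~ gt Th t s }.

Record blocked (Th : theory) (y : literal) (k : rule) : Prop := {
  blocked_rule : in_R Th (compl y) k;
  blocked_body : rbody k = [];
  blocked_beaten : forall t, in_R Th y t -> gt Th k t;
  blocked_unbeating : forall t, in_R Th y t -> ~ gt Th t k }.

Record projected (Th : theory) (a : literal) (p k pn : rule) (x xn : literal) : Prop := {
  proj_rule : in_R Th a p;
  proj_kind : rkindof p = Defeasible;
  proj_body : rbody p = [x];
  proj_block_rule : in_R Th (compl a) k;
  proj_block_body : rbody k = [];
  proj_beats_block : gt Th p k;
  proj_compl_rule : in_R Th (compl a) pn;
  proj_compl_body : rbody pn = [xn];
  proj_rules_pos : forall t, in_R Th a t -> rkindof t = Strict \/ t = p \/ rkindof t = Defeater;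
  proj_rules_neg : forall s, in_R Th (compl a) s -> rkindof s = Strict \/ s = pn \/ s = k;
  proj_only_beats_block : forall t, in_R Th a t -> gt Th t k -> t = p;
  proj_beats_strict : forall s, in_R Th (compl a) s -> rkindof s = Strict -> gt Th p s }.

(* The clauses for a tag [u] of a pair refute attackers with the dual tag [v];
   the case analyses below run over the clause shapes of ∂ and δ, of δ*, and
   of σ and σ*. *)
Section Guards.
Variables (d e u v : tag).
Hypothesis Hde : companion d e.
Hypothesis Huv : dual_pair d e u v.

Ltac tag_cases :=
  destruct Hde as [[-> ->] | [[-> ->] | [-> ->]]];
  destruct Huv as [[-> ->] | [-> ->]]; cbn [T];
  unfold plus_amb, plus_star, plus_sig, minus_amb, minus_star, minus_sig.

Lemma guarded_plus Th E x : guarded Th x ->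
  E (Minus, TDelta, compl x) ->
  (exists t, in_R Th x t /\ all_plus E u (rbody t)) ->
  (forall s, in_R Th (compl x) s -> some_minus E v (rbody s)) -> T Th E (Plus, u, x).
Proof.
  intros [Gkind _ _] h1 [t [ht h2]] h3.
  assert (htsd : in_Rsd Th x t) by (split; auto; right; auto).
  tag_cases; right.
  all: first
   [ split; [eauto | split; [auto | intros; left; auto]]
   | exists t; split; [auto | split; [auto | split; [auto | intros; left; auto]]]
   | exists t; split; [auto | split; [auto | intros; left; auto]] ].
Qed.

Lemma guarded_plus_inv Th E x : guarded Th x ->
  T Th E (Plus, u, x) -> E (Plus, TDelta, x) \/
  ((exists t, in_R Th x t /\ all_plus E u (rbody t)) /\
   (forall s, in_R Th (compl x) s -> some_minus E v (rbody s))).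
Proof.
  intros [_ Gbeaten Gunbeating].
  tag_cases; (intros [h | h]; [now left | right]).
  all: first
   [ destruct h as [[t [[ht _] h1]] [_ h3]]; split; [eauto |]; intros s hs;
     destruct (h3 s hs) as [z | [t' [[ht' _] [_ hg]]]]; [auto | now destruct (Gunbeating t' s)]
   | destruct h as [t [[ht _] [h1 [_ h3]]]]; split; [eauto |]; intros s hs;
     destruct (h3 s hs) as [z | hg]; [auto | now destruct (Gunbeating t s)]
   | destruct h as [t [[ht _] [h1 h3]]]; split; [eauto |]; intros s hs;
     destruct (h3 s hs) as [z | hg]; [auto | now destruct hg; apply Gbeaten] ].
Qed.

Lemma guarded_minus Th E x : guarded Th x ->
  E (Minus, TDelta, x) ->
  ((forall t, in_R Th x t -> some_minus E u (rbody t)) \/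
   (exists s, in_R Th (compl x) s /\ all_plus E v (rbody s))) -> T Th E (Minus, u, x).
Proof.
  intros [_ Gbeaten Gunbeating] h0 [h | [s [hs h]]].
  all: tag_cases; split; auto.
  all: first
   [ solve [left; intros r [hr _]; auto]
   | solve [intros r [hr _]; left; auto]
   | right; right; exists s; split; [auto | split; [auto | intros t [ht _]; right; auto]]
   | intros r [hr _]; right; right; exists s; split; [auto | split; auto]
   | intros r [hr _]; right; exists s; split; [auto | split; auto] ].
Qed.

Lemma guarded_minus_inv Th E x : guarded Th x ->
  T Th E (Minus, u, x) -> E (Minus, TDelta, x) /\
  ((forall t, in_R Th x t -> some_minus E u (rbody t)) \/ E (Plus, TDelta, compl x) \/
   (exists s, in_R Th (compl x) s /\ all_plus E v (rbody s))).
Proof.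
  intros [Gkind _ _] h.
  assert (Hsd : forall t, in_R Th x t -> in_Rsd Th x t) by (intros t ht; split; auto; right; auto).
  destruct (classic (forall t, in_R Th x t -> some_minus E u (rbody t))) as [hall | hex].
  { split; [revert h; tag_cases; now intros [h0 _] | now left]. }
  apply not_all_ex_not in hex as [t hex]; apply imply_to_and in hex as [ht hn].
  revert h; tag_cases; intros [h0 h]; split; auto; right.
  all: first
   [ destruct h as [h | [h | [s [hs [h _]]]]];
     [destruct hn; apply h, Hsd | left | right; exists s]; auto
   | destruct (h t (Hsd t ht)) as [z | [z | [s [hs [z _]]]]];
     [contradiction | left | right; exists s]; auto
   | destruct (h t (Hsd t ht)) as [z | [s [hs [z _]]]]; [contradiction | right; exists s]; auto ].
Qed.

Lemma blocked_plus_inv Th E y k : blocked Th y k ->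
  T Th E (Plus, u, y) -> E (Plus, TDelta, y).
Proof.
  intros [hk hb Bbeaten Bunbeating].
  assert (hbody : forall w, ~ some_minus E w (rbody k)) by (intros w [z [hz _]]; now rewrite hb in hz).
  tag_cases; (intros [h | h]; [auto | exfalso]).
  all: first
   [ destruct h as [_ [_ h3]]; destruct (h3 k hk) as [z | [t [[ht _] [_ hg]]]];
     [now apply (hbody _ z) | now apply (Bunbeating t)]
   | destruct h as [t [[ht _] [_ [_ h3]]]]; destruct (h3 k hk) as [z | hg];
     [now apply (hbody _ z) | now apply (Bunbeating t)]
   | destruct h as [t [[ht _] [_ h3]]]; destruct (h3 k hk) as [z | hg];
     [now apply (hbody _ z) | now apply hg, Bbeaten] ].
Qed.

Lemma blocked_minus Th E y k : blocked Th y k ->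
  E (Minus, TDelta, y) -> T Th E (Minus, u, y).
Proof.
  intros [hk hb Bbeaten Bunbeating] h0.
  assert (hbody : forall w, all_plus E w (rbody k)) by (intros w z hz; now rewrite hb in hz).
  tag_cases; split; auto.
  all: first
   [ right; right; exists k; split; [auto | split; [auto | intros t [ht _]; right; auto]]
   | intros r [hr _]; right; right; exists k; split; [auto | split; auto]
   | intros r [hr _]; right; exists k; split; [auto | split; auto] ].
Qed.

End Guards.

Section Projection.
Variables (d e : tag) (Th : theory) (E : cset) (a : literal) (p k pn : rule) (x xn : literal).
Hypothesis Hde : companion d e.
Hypothesis Hp : projected Th a p k pn x xn.

Let p_sd : in_Rsd Th a p.
Proof. destruct Hp as [hp hpk]; split; auto. Qed.

Let all_plus_p w : all_plus E w (rbody p) <-> E (Plus, w, x).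
Proof.
  destruct Hp as [_ _ hpb]; rewrite hpb.
  split; [intros h; apply h; now left | now intros h z [<- | []]].
Qed.

Let some_minus_p w : some_minus E w (rbody p) <-> E (Minus, w, x).
Proof.
  destruct Hp as [_ _ hpb]; rewrite hpb.
  split; [intros [z [[<- | []] hz]] | exists x; split; [left |]]; auto.
Qed.

Let all_plus_pn w : all_plus E w (rbody pn) <-> E (Plus, w, xn).
Proof.
  destruct Hp as [_ _ _ _ _ _ _ hpnb]; rewrite hpnb.
  split; [intros h; apply h; now left | now intros h z [<- | []]].
Qed.

Let some_minus_pn w : some_minus E w (rbody pn) <-> E (Minus, w, xn).
Proof.
  destruct Hp as [_ _ _ _ _ _ _ hpnb]; rewrite hpnb.
  split; [intros [z [[<- | []] hz]] | exists xn; split; [left |]]; auto.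
Qed.

Ltac tag_cases :=
  destruct Hde as [[-> ->] | [[-> ->] | [-> ->]]]; cbn [T];
  unfold plus_amb, plus_star, minus_amb, minus_star.

Lemma projected_plus_inv : T Th E (Plus, d, a) -> E (Plus, TDelta, a) \/ E (Plus, d, x).
Proof.
  destruct Hp as [_ _ _ hk hkb _ _ _ _ _ Honly _].
  assert (hk0 : forall w, ~ some_minus E w (rbody k)) by (intros w [z [hz _]]; now rewrite hkb in hz).
  tag_cases; (intros [h | h]; [now left | right]).
  all: first
   [ destruct h as [_ [_ h3]]; destruct (h3 k hk) as [z | [t [[ht _] [hb hg]]]]
   | destruct h as [t [[ht _] [hb [_ h3]]]]; destruct (h3 k hk) as [z | hg] ];
   [now destruct (hk0 _ z) | rewrite (Honly t ht hg) in hb; exact (proj1 (all_plus_p _) hb)].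
Qed.

Lemma projected_plus :
  E (Plus, d, x) -> E (Minus, TDelta, compl a) -> E (Minus, e, xn) -> T Th E (Plus, d, a).
Proof.
  intros h1 h2 h3; destruct Hp as [_ _ _ _ _ hgk _ _ _ Hneg _ Hstrict].
  assert (hp : all_plus E d (rbody p)) by now apply all_plus_p.
  assert (hpn : some_minus E e (rbody pn)) by now apply some_minus_pn.
  tag_cases; right.
  1,3: split; [eauto | split; [auto |]]; intros s hs; destruct (Hneg s hs) as [hs' | [-> | ->]];
       [right; exists p; auto | now left | right; exists p; auto].
  exists p; split; [| split; [| split]]; auto.
  intros s hs; destruct (Hneg s hs) as [hs' | [-> | ->]]; auto.
Qed.

Lemma projected_minus_inv :
  T Th E (Minus, d, a) -> E (Minus, TDelta, a) /\
   (E (Minus, d, x) \/ E (Plus, TDelta, compl a) \/ E (Plus, e, xn)).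
Proof.
  destruct Hp as [_ _ _ _ _ hgk _ _ _ Hneg _ Hstrict].
  tag_cases; intros [h0 h]; split; auto.
  2: destruct (h p p_sd) as [hp | [hp | [s [hs [hb hp]]]]];
       [left; now apply some_minus_p | now right; left |].
  1,3: destruct h as [h | [h | [s [hs [hb h]]]]];
       [left; apply some_minus_p, h, p_sd | now right; left |];
       destruct (h p p_sd) as [hp | hp]; [left; now apply some_minus_p |].
  all: destruct (Hneg s hs) as [hk | [-> | ->]];
    [now destruct hp; apply Hstrict | right; right; exact (proj1 (all_plus_pn _) hb) | now destruct hp].
Qed.

Lemma projected_minus :
  E (Minus, TDelta, a) -> (E (Minus, d, x) \/ E (Plus, TDelta, compl a)) -> T Th E (Minus, d, a).
Proof.
  intros h0 h; destruct Hp as [_ _ _ hk hkb _ _ _ Hpos _ Honly _].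
  assert (hk0 : forall w, all_plus E w (rbody k)) by (intros w z hz; now rewrite hkb in hz).
  assert (Hcand : forall t, in_Rsd Th a t -> t = p \/ ~ gt Th t k).
  { intros t [ht hkd]; destruct (Hpos t ht) as [w | [w | w]]; auto.
    - right; intros g; rewrite (Honly t ht g) in w; now destruct Hp as [_ hpk]; congruence.
    - destruct hkd; congruence. }
  tag_cases; split; auto.
  1,3: destruct h as [h | h];
       [right; right; exists k; split; [auto | split; [auto |]] | now right; left];
       intros t ht; destruct (Hcand t ht) as [-> | z]; [left; now apply some_minus_p | now right].
  intros r hr; destruct h as [h | h]; [| now right; left].
  destruct (Hcand r hr) as [-> | z]; [left; now apply some_minus_p | right; right; exists k; auto].
Qed.

End Projection.

(** * The simulating theory *)

Definition label_pair_eq_dec (x y : label * label) : {x = y} + {x <> y}.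
Proof. decide equality; apply Nat.eq_dec. Defined.

Definition atom_of (a : literal) : atom := match a with Pos p => p | Neg p => p end.

Lemma atom_of_compl a : atom_of (compl a) = atom_of a.
Proof. now destruct a. Qed.

Definition lit_index (a : literal) : nat := match a with Pos p => 2 * p | Neg p => 2 * p + 1 end.

Lemma lit_index_inj a b : lit_index a = lit_index b -> a = b.
Proof. destruct a, b; simpl; intros; f_equal; lia. Qed.

Definition is_sd (r : rule) : bool := match rkindof r with Defeater => false | _ => true end.
Definition is_strict (r : rule) : bool := match rkindof r with Strict => true | _ => false end.

Lemma is_sd_spec r : is_sd r = true <-> rkindof r = Strict \/ rkindof r = Defeasible.
Proof. unfold is_sd; destruct (rkindof r); intuition congruence. Qed.

Lemma is_strict_spec r : is_strict r = true <-> rkindof r = Strict.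
Proof. unfold is_strict; destruct (rkindof r); intuition congruence. Qed.

Inductive rule_id : Type :=
  | RStrict (r : rule)
  | RDelta (a : literal)
  | RDeltaBlock (a : literal)
  | RNoDelta (a : literal)
  | RNoDeltaBlock (a : literal)
  | RStarDelta (a : literal)
  | RProject (a : literal)
  | RBlock (a : literal)
  | RWin (r : rule)
  | RStarWin (r : rule)
  | RAttack (r s : rule)
  | RGuard.

Definition rule_id_eq_dec (i j : rule_id) : {i = j} + {i <> j}.
Proof. decide equality; auto using rule_eq_dec, literal_eq_dec. Defined.

(* The residue mod 16 records the kind of rule; [label_rank] below reads off
   from it a rank that decreases along the superiority relation. *)
Definition rule_label (i : rule_id) : label :=
  match i with
  | RStrict r => 16 * rlabel r
  | RDelta a => 16 * lit_index a + 1
  | RDeltaBlock a => 16 * lit_index a + 2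
  | RNoDelta a => 16 * lit_index a + 3
  | RNoDeltaBlock a => 16 * lit_index a + 4
  | RStarDelta a => 16 * lit_index a + 5
  | RProject a => 16 * lit_index a + 6
  | RBlock a => 16 * lit_index a + 7
  | RWin r => 16 * rlabel r + 8
  | RStarWin r => 16 * rlabel r + 9
  | RAttack r s => 16 * Cantor.to_nat (rlabel r, rlabel s) + 10
  | RGuard => 11
  end.

Section Construction.
Variable D : theory.

Definition atoms_of_theory : list atom :=
  map atom_of (facts D) ++
  flat_map (fun r => atom_of (rhead r) :: map atom_of (rbody r)) (rules D).

Definition atom_bound : nat := S (list_max atoms_of_theory).

Lemma atom_lt_bound p : In p atoms_of_theory -> p < atom_bound.
Proof.
  intros hp; unfold atom_bound.
  assert (hmax := proj1 (list_max_le atoms_of_theory _) (le_n _)).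
  rewrite Forall_forall in hmax; specialize (hmax p hp); lia.
Qed.

Lemma fact_lt a : In a (facts D) -> atom_of a < atom_bound.
Proof. intros h; apply atom_lt_bound, in_or_app; left; now apply in_map. Qed.

Lemma head_lt r : In r (rules D) -> atom_of (rhead r) < atom_bound.
Proof. intros h; apply atom_lt_bound, in_or_app; right; apply in_flat_map; exists r; simpl; auto. Qed.

Lemma body_lt r a : In r (rules D) -> In a (rbody r) -> atom_of a < atom_bound.
Proof.
  intros h h'; apply atom_lt_bound, in_or_app; right; apply in_flat_map.
  exists r; split; [auto | right; now apply in_map].
Qed.

Lemma sigma_lt a : in_Sigma D a -> atom_of a < atom_bound.
Proof. intros [h | [r [hr [<- | h]]]]; eauto using fact_lt, head_lt, body_lt. Qed.

Definition base_lits : list literal := flat_map (fun p => [Pos p; Neg p]) (seq 0 atom_bound).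

Lemma in_base_lits a : In a base_lits <-> atom_of a < atom_bound.
Proof.
  unfold base_lits; rewrite in_flat_map; split.
  - intros [p [hp ha]]; apply in_seq in hp; destruct ha as [<- | [<- | []]]; simpl; lia.
  - intros h; exists (atom_of a); split; [apply in_seq; lia|]; destruct a; simpl; auto.
Qed.

Definition fresh_atom (k i : nat) : atom := atom_bound + 5 * i + k.

Definition delta_lit (a : literal) : literal := Pos (fresh_atom 0 (lit_index a)).
Definition nodelta_lit (a : literal) : literal := Pos (fresh_atom 1 (lit_index a)).
Definition star_lit (a : literal) : literal := Pos (fresh_atom 2 (lit_index a)).
Definition win_lit (r : rule) : literal := Pos (fresh_atom 3 (rlabel r)).
Definition guard_lit : literal := Pos (fresh_atom 4 0).

Definition fresh_lits : list literal :=
  flat_map (fun a => [delta_lit a; compl (delta_lit a); nodelta_lit a; compl (nodelta_lit a);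
                      star_lit a; compl (star_lit a)]) base_lits ++
  flat_map (fun r => [win_lit r; compl (win_lit r)]) (filter is_sd (rules D)).

Definition attacks (r s : rule) : bool :=
  if literal_eq_dec (rhead s) (compl (rhead r)) then
    if in_dec label_pair_eq_dec (rlabel r, rlabel s) (sup D) then false else true
  else false.

Definition rule_of (i : rule_id) : rule :=
  match i with
  | RStrict r => mkRule (rule_label i) (rbody r) (rhead r) Strict
  | RDelta a => mkRule (rule_label i) [a] (delta_lit a) Strict
  | RDeltaBlock a => mkRule (rule_label i) [] (compl (delta_lit a)) Defeater
  | RNoDelta a => mkRule (rule_label i) [] (nodelta_lit a) Defeasible
  | RNoDeltaBlock a => mkRule (rule_label i) [delta_lit (compl a)] (compl (nodelta_lit a)) Defeater
  | RStarDelta a => mkRule (rule_label i) [delta_lit a] (star_lit a) Defeasible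
  | RProject a => mkRule (rule_label i) [star_lit a] a Defeasible
  | RBlock a => mkRule (rule_label i) [] (compl a) Defeater
  | RWin r => mkRule (rule_label i) (map star_lit (rbody r)) (win_lit r) Defeasible
  | RStarWin r =>
      mkRule (rule_label i) [nodelta_lit (rhead r); win_lit r] (star_lit (rhead r)) Defeasible
  | RAttack r s => mkRule (rule_label i) (map star_lit (rbody s)) (compl (win_lit r)) Defeater
  | RGuard => mkRule (rule_label i) fresh_lits guard_lit Defeasible
  end.

Lemma rlabel_rule_of i : rlabel (rule_of i) = rule_label i.
Proof. now destruct i. Qed.

Definition lit_ids (a : literal) : list rule_id :=
  [RDelta a; RDeltaBlock a; RNoDelta a; RNoDeltaBlock a; RStarDelta a; RProject a; RBlock a].

Definition sd_rule_ids (r : rule) : list rule_id :=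
  RWin r :: RStarWin r :: map (RAttack r) (filter (attacks r) (rules D)).

Definition sim_ids : list rule_id :=
  map RStrict (filter is_strict (rules D)) ++ flat_map lit_ids base_lits ++
  flat_map sd_rule_ids (filter is_sd (rules D)) ++ [RGuard].

(* The copies of the strict rules of D serve only for Δ: the defeater
   [⇝ ~a] and the rule [star_lit (~a) ⇒ ~a] override them, their defeasible
   use being accounted for by [win_lit]. *)
Definition sim_pairs : list (rule_id * rule_id) :=
  flat_map (fun a => [(RProject a, RBlock a); (RDeltaBlock a, RDelta a);
                      (RNoDeltaBlock a, RNoDelta a)]) base_lits ++
  flat_map (fun r => [(RBlock (rhead r), RStrict r); (RProject (compl (rhead r)), RStrict r)])
    (filter is_strict (rules D)) ++
  flat_map (fun r => map (fun s => (RAttack r s, RWin r)) (filter (attacks r) (rules D)))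
    (filter is_sd (rules D)).

Definition sim_theory : theory :=
  mkTheory (facts D) (map rule_of (nodup rule_id_eq_dec sim_ids))
    (map (fun ij => (rule_label (fst ij), rule_label (snd ij))) sim_pairs).

End Construction.

Lemma NoDup_map_inj_on {A B} (f : A -> B) l x y :
  NoDup (map f l) -> In x l -> In y l -> f x = f y -> x = y.
Proof.
  induction l as [|a l IH]; simpl; [tauto|]; intros hn hx hy he; inversion hn as [|? ? hna hnl]; subst.
  destruct hx as [<- | hx], hy as [<- | hy]; auto.
  - exfalso; apply hna; rewrite he; now apply in_map.
  - exfalso; apply hna; rewrite <- he; now apply in_map.
Qed.

Definition label_rank (l : label) : nat :=
  match l mod 16 with 6 => 2 | 2 | 4 | 7 | 10 => 1 | _ => 0 end.

Lemma label_tag n k : k < 16 -> (16 * n + k) mod 16 = k.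
Proof. intros; rewrite Nat.add_comm, Nat.mul_comm, Nat.Div0.mod_add; now apply Nat.mod_small. Qed.

Section Structure.
Variable D : theory.
Hypothesis wfD : wf_theory D.

Lemma rule_label_unique r r' : In r (rules D) -> In r' (rules D) -> rlabel r = rlabel r' -> r = r'.
Proof. intros; eapply NoDup_map_inj_on; eauto; apply wfD. Qed.

Lemma attacks_spec r s : attacks D r s = true <-> rhead s = compl (rhead r) /\ ~ gt D r s.
Proof.
  unfold attacks, gt, sup_rel.
  destruct (literal_eq_dec _ _); [destruct (in_dec _ _ _)|]; split; intros h; try discriminate; tauto.
Qed.

Inductive sim_id : rule_id -> Prop :=
  | sim_strict r : In r (rules D) -> rkindof r = Strict -> sim_id (RStrict r)
  | sim_lit a i : atom_of a < atom_bound D -> In i (lit_ids a) -> sim_id i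
  | sim_win r : In r (rules D) -> is_sd r = true -> sim_id (RWin r)
  | sim_star_win r : In r (rules D) -> is_sd r = true -> sim_id (RStarWin r)
  | sim_attack r s : In r (rules D) -> is_sd r = true -> In s (rules D) ->
      rhead s = compl (rhead r) -> ~ gt D r s -> sim_id (RAttack r s)
  | sim_guard : sim_id RGuard.

Lemma sim_ids_spec i : In i (sim_ids D) <-> sim_id i.
Proof.
  unfold sim_ids; rewrite !in_app_iff, in_map_iff, !in_flat_map; split.
  - intros [[r [<- hr]] | [[a [ha hi]] | [[r [hr hi]] | [<- | []]]]].
    + apply filter_In in hr as [hr hs]; apply sim_strict, is_strict_spec; auto.
    + apply (sim_lit a); auto; now apply in_base_lits.
    + apply filter_In in hr as [hr hs].
      destruct hi as [<- | [<- | hi]]; [now constructor | now constructor|].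
      apply in_map_iff in hi as [s [<- hs']]; apply filter_In in hs' as [hs' ha].
      apply attacks_spec in ha as [ha1 ha2]; now constructor.
    + constructor.
  - intros [r hr hk | a j ha hj | r hr hs | r hr hs | r s hr hsd hs ha1 ha2 | ].
    + left; exists r; split; auto; apply filter_In; split; auto; now apply is_strict_spec.
    + right; left; exists a; split; auto; now apply in_base_lits.
    + right; right; left; exists r; split; [apply filter_In|]; simpl; auto.
    + right; right; left; exists r; split; [apply filter_In|]; simpl; auto.
    + right; right; left; exists r; split; [apply filter_In; auto|]; right; right.
      apply in_map, filter_In; split; auto; now apply attacks_spec.
    + right; right; right; now left.
Qed.

Inductive sim_sup : rule_id -> rule_id -> Prop :=
  | sup_project a : atom_of a < atom_bound D -> sim_sup (RProject a) (RBlock a)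
  | sup_delta a : atom_of a < atom_bound D -> sim_sup (RDeltaBlock a) (RDelta a)
  | sup_nodelta a : atom_of a < atom_bound D -> sim_sup (RNoDeltaBlock a) (RNoDelta a)
  | sup_block_strict r : In r (rules D) -> rkindof r = Strict ->
      sim_sup (RBlock (rhead r)) (RStrict r)
  | sup_project_strict r : In r (rules D) -> rkindof r = Strict ->
      sim_sup (RProject (compl (rhead r))) (RStrict r)
  | sup_attack r s : In r (rules D) -> is_sd r = true -> In s (rules D) ->
      rhead s = compl (rhead r) -> ~ gt D r s -> sim_sup (RAttack r s) (RWin r).

Lemma sim_pairs_spec i j : In (i, j) (sim_pairs D) <-> sim_sup i j.
Proof.
  unfold sim_pairs; rewrite !in_app_iff, !in_flat_map; split.
  - intros [[a [ha hi]] | [[r [hr hi]] | [r [hr hi]]]].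
    + apply in_base_lits in ha; simpl in hi.
      destruct hi as [e | [e | [e | []]]]; injection e as <- <-; now constructor.
    + apply filter_In in hr as [hr hs]; apply is_strict_spec in hs; simpl in hi.
      destruct hi as [e | [e | []]]; injection e as <- <-; now constructor.
    + apply filter_In in hr as [hr hsd].
      apply in_map_iff in hi as [s [e hs]]; apply filter_In in hs as [hs ha].
      apply attacks_spec in ha as [ha1 ha2]; injection e as <- <-; now constructor.
  - intros [a ha | a ha | a ha | r hr hk | r hr hk | r s hr hsd hs ha1 ha2].
    1-3: left; exists a; split; [now apply in_base_lits | simpl; auto].
    1-2: right; left; exists r; split; [apply filter_In; split; [|apply is_strict_spec]|]; simpl; auto.
    right; right; exists r; split; [apply filter_In; auto|].
    apply in_map_iff; exists s; split; auto; apply filter_In; split; auto; now apply attacks_spec.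
Qed.

Lemma sim_sup_ids i j : sim_sup i j -> sim_id i /\ sim_id j.
Proof.
  intros [a ha | a ha | a ha | r hr hk | r hr hk | r s hr hsd hs ha1 ha2].
  1-3: split; apply (sim_lit a); simpl; auto 10.
  1-2: pose proof (head_lt D r hr); split; [|now constructor].
  - apply (sim_lit (rhead r)); simpl; auto 10.
  - apply (sim_lit (compl (rhead r))); [rewrite atom_of_compl; auto | simpl; auto 10].
  - split; now constructor.
Qed.

Lemma rule_label_inj i j : sim_id i -> sim_id j -> rule_label i = rule_label j -> i = j.
Proof.
  intros hi hj; destruct i, j; intros h; cbn [rule_label] in h; try lia;
    try (f_equal; apply lit_index_inj; lia); try reflexivity;
    inversion hi; inversion hj; subst; try (simpl in *; intuition discriminate).
  all: try (f_equal; apply rule_label_unique; auto; lia).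
  assert (h' : Cantor.to_nat (rlabel r, rlabel s) = Cantor.to_nat (rlabel r0, rlabel s0)) by lia.
  apply Cantor.to_nat_inj in h'; injection h' as h1 h2; f_equal; apply rule_label_unique; auto.
Qed.

Lemma label_rank_decreases i j : sim_sup i j -> label_rank (rule_label j) < label_rank (rule_label i).
Proof.
  intros [a ha | a ha | a ha | r hr hk | r hr hk | r s hr hsd hs ha1 ha2]; unfold label_rank;
    cbn [rule_label]; rewrite ?Nat.add_0_r, !label_tag;
    lia || (rewrite Nat.mul_comm, Nat.Div0.mod_mul; lia).
Qed.

Lemma wf_sim_theory : wf_theory (sim_theory D).
Proof.
  split.
  - cbn [rules sim_theory]; rewrite map_map; apply NoDup_map_NoDup_ForallPairs; [|apply NoDup_nodup].
    intros i j hi hj; rewrite !nodup_In, !sim_ids_spec, !rlabel_rule_of in *; now apply rule_label_inj.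
  - assert (step : forall x y, sup_rel (sim_theory D) x y -> label_rank y < label_rank x).
    { unfold sup_rel; cbn [sup sim_theory]; intros x y h.
      apply in_map_iff in h as [[i j] [e h]]; injection e as <- <-.
      now apply sim_pairs_spec, label_rank_decreases in h. }
    assert (trans : forall x y, clos_trans label (sup_rel (sim_theory D)) x y ->
      label_rank y < label_rank x)
      by (induction 1; eauto; lia).
    intros l h; apply trans in h; lia.
Qed.
End Structure.

(** * Correspondence between D + A and D' + A *)

Section Correspondence.
Variables (D : theory) (FA : list literal).
Hypothesis wfD : wf_theory D.
Hypothesis Hmod : modular D (sim_theory D) (fact_theory FA).
Let DA := add D (fact_theory FA).
Let D'A := add (sim_theory D) (fact_theory FA).
Let bound := atom_bound D.

Lemma in_sim_rules t : In t (rules D'A) <-> exists i, sim_id D i /\ t = rule_of D i.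
Proof.
  cbn [D'A rules add sim_theory fact_theory]; rewrite app_nil_r, in_map_iff.
  split; intros [i [h1 h2]]; exists i; rewrite ?nodup_In, ?sim_ids_spec in *; auto.
Qed.

Lemma sim_rule_in i : sim_id D i -> In (rule_of D i) (rules D'A).
Proof. intros h; apply in_sim_rules; eauto. Qed.

Lemma gt_sim i j : sim_id D i -> sim_id D j -> gt D'A (rule_of D i) (rule_of D j) <-> sim_sup D i j.
Proof.
  intros hi hj; unfold gt, sup_rel; cbn [D'A sup add sim_theory fact_theory].
  rewrite app_nil_r, !rlabel_rule_of, in_map_iff; split.
  - intros [[i' j'] [e h]]; injection e as e1 e2; apply sim_pairs_spec in h as h'.
    destruct (sim_sup_ids D i' j' h') as [hi' hj'].
    now rewrite <- (rule_label_inj D wfD i' i), <- (rule_label_inj D wfD j' j).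
  - intros h; exists (i, j); split; [reflexivity | now apply sim_pairs_spec].
Qed.

Lemma gt_sim_sup i j : sim_sup D i j -> gt D'A (rule_of D i) (rule_of D j).
Proof. intros h; destruct (sim_sup_ids D i j h); now apply gt_sim. Qed.

Lemma delta_lit_inj a b : delta_lit D a = delta_lit D b -> a = b.
Proof. unfold delta_lit, fresh_atom; intros h; injection h; intros; apply lit_index_inj; lia. Qed.
Lemma nodelta_lit_inj a b : nodelta_lit D a = nodelta_lit D b -> a = b.
Proof. unfold nodelta_lit, fresh_atom; intros h; injection h; intros; apply lit_index_inj; lia. Qed.
Lemma star_lit_inj a b : star_lit D a = star_lit D b -> a = b.
Proof. unfold star_lit, fresh_atom; intros h; injection h; intros; apply lit_index_inj; lia. Qed.
Lemma win_lit_inj r s : In r (rules D) -> In s (rules D) -> win_lit D r = win_lit D s -> r = s.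
Proof.
  unfold win_lit, fresh_atom; intros h1 h2 h; injection h; intros.
  apply (rule_label_unique D wfD); auto; lia.
Qed.

Ltac sim_rule_cases :=
  let ht := fresh "ht" in let he := fresh "he" in let i := fresh "i" in let hi := fresh "hi" in
  intros [ht he]; apply in_sim_rules in ht; destruct ht as [i [hi ->]];
  destruct hi as [? hr ? | ? ? ? hi | ? hr ? | ? hr ? | ? ? hr ? ? ? ? | ];
  [ pose proof (head_lt D _ hr)
  | simpl in hi; repeat destruct hi as [<- | hi]; try contradiction | | | | ];
  cbn [rule_of rhead] in he.

Ltac heads_differ he :=
  first [ discriminate he
        | unfold delta_lit, nodelta_lit, star_lit, win_lit, guard_lit, fresh_atom in he;
          cbn [compl] in he; first [discriminate he | injection he; intros; lia]
        | apply (f_equal atom_of) in he; rewrite ?atom_of_compl in he;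
          unfold delta_lit, nodelta_lit, star_lit, win_lit, guard_lit, fresh_atom in he;
          cbn [atom_of compl] in he; rewrite ?atom_of_compl in he; lia ].

Lemma rules_for_star a t : atom_of a < bound -> in_R D'A (star_lit D a) t ->
  t = rule_of D (RStarDelta a) \/
  exists r, In r (rules D) /\ is_sd r = true /\ rhead r = a /\ t = rule_of D (RStarWin r).
Proof.
  intros ha; sim_rule_cases; try heads_differ he.
  - apply star_lit_inj in he; subst; auto.
  - apply star_lit_inj in he; subst; right; eauto.
Qed.

Lemma rules_for_star_compl a t : in_R D'A (compl (star_lit D a)) t -> False.
Proof. sim_rule_cases; heads_differ he. Qed.

Lemma rules_for_win r t : In r (rules D) -> in_R D'A (win_lit D r) t -> t = rule_of D (RWin r).
Proof. intros hr0; sim_rule_cases; try heads_differ he; apply win_lit_inj in he; subst; auto. Qed.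

Lemma rules_for_win_compl r t : In r (rules D) -> in_R D'A (compl (win_lit D r)) t ->
  exists s, In s (rules D) /\ rhead s = compl (rhead r) /\ ~ gt D r s /\ t = rule_of D (RAttack r s).
Proof.
  intros hr0; sim_rule_cases; try heads_differ he.
  apply compl_inj, win_lit_inj in he; auto; subst; eauto.
Qed.

Lemma rules_for_nodelta a t : in_R D'A (nodelta_lit D a) t -> t = rule_of D (RNoDelta a).
Proof. sim_rule_cases; try heads_differ he; apply nodelta_lit_inj in he; now subst. Qed.

Lemma rules_for_nodelta_compl a t :
  in_R D'A (compl (nodelta_lit D a)) t -> t = rule_of D (RNoDeltaBlock a).
Proof. sim_rule_cases; try heads_differ he; apply compl_inj, nodelta_lit_inj in he; now subst. Qed.

Lemma rules_for_delta a t : in_R D'A (delta_lit D a) t -> t = rule_of D (RDelta a).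
Proof. sim_rule_cases; try heads_differ he; apply delta_lit_inj in he; now subst. Qed.

Lemma rules_for_base a t : atom_of a < bound -> in_R D'A a t ->
  (exists r, In r (rules D) /\ rkindof r = Strict /\ rhead r = a /\ t = rule_of D (RStrict r)) \/
  t = rule_of D (RProject a) \/ t = rule_of D (RBlock (compl a)).
Proof.
  intros ha; sim_rule_cases; try heads_differ he.
  - left; eauto.
  - subst; auto.
  - right; right; now rewrite <- he, compl_involutive.
Qed.

Lemma sim_rule_in_R i x : sim_id D i -> rhead (rule_of D i) = x -> in_R D'A x (rule_of D i).
Proof. split; auto using sim_rule_in. Qed.

Ltac lit_id a := apply (sim_lit D a); [auto | simpl; auto 10].

Ltac no_sim_sup := let h := fresh in intros h; apply gt_sim in h; [inversion h | ..].

Lemma guarded_star a : atom_of a < bound -> guarded D'A (star_lit D a).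
Proof.
  intros ha; split.
  - intros t ht; now destruct (rules_for_star a t ha ht) as [-> | [r [_ [_ [_ ->]]]]].
  - intros t s _ hs; destruct (rules_for_star_compl a s hs).
  - intros t s _ hs; destruct (rules_for_star_compl a s hs).
Qed.

Lemma guarded_win r : In r (rules D) -> is_sd r = true -> guarded D'A (win_lit D r).
Proof.
  intros hr hsd; split; [intros t ht; now rewrite (rules_for_win r t hr ht) | |];
    intros t s' ht hs; rewrite (rules_for_win r t hr ht);
    destruct (rules_for_win_compl r s' hr hs) as [s [hs1 [hs2 [hs3 ->]]]].
  - apply gt_sim_sup; now constructor.
  - no_sim_sup; now constructor.
Qed.

Lemma guarded_nodelta a : atom_of a < bound -> guarded D'A (nodelta_lit D a).
Proof.
  intros ha; split; [intros t ht; now rewrite (rules_for_nodelta a t ht) | |];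
    intros t s ht hs; rewrite (rules_for_nodelta a t ht), (rules_for_nodelta_compl a s hs).
  - apply gt_sim_sup; now constructor.
  - no_sim_sup; lit_id a.
Qed.

Lemma blocked_delta a : atom_of a < bound -> blocked D'A (delta_lit D a) (rule_of D (RDeltaBlock a)).
Proof.
  intros ha; split; [apply sim_rule_in_R; [lit_id a | reflexivity] | reflexivity | |];
    intros t ht; rewrite (rules_for_delta a t ht).
  - apply gt_sim_sup; now constructor.
  - no_sim_sup; lit_id a.
Qed.

Lemma projected_base a : atom_of a < bound ->
  projected D'A a (rule_of D (RProject a)) (rule_of D (RBlock a)) (rule_of D (RProject (compl a)))
    (star_lit D a) (star_lit D (compl a)).
Proof.
  intros ha.
  assert (hca : atom_of (compl a) < bound) by now rewrite atom_of_compl.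
  split; try reflexivity.
  - apply sim_rule_in_R; [lit_id a | reflexivity].
  - apply sim_rule_in_R; [lit_id a | reflexivity].
  - apply gt_sim_sup; now constructor.
  - apply sim_rule_in_R; [lit_id (compl a) | reflexivity].
  - intros t ht; now destruct (rules_for_base a t ha ht) as [[r [_ [hk [_ ->]]]] | [-> | ->]]; auto.
  - intros t ht; destruct (rules_for_base (compl a) t hca ht) as [[r [_ [hk [_ ->]]]] | [-> | ->]];
      rewrite ?compl_involutive; auto.
  - intros t ht g; destruct (rules_for_base a t ha ht) as [[r [hr [hk [_ ->]]]] | [-> | ->]]; auto.
    + revert g; no_sim_sup; [now constructor | lit_id a].
    + revert g; no_sim_sup; [lit_id (compl a) | lit_id a].
  - intros s hs hk; destruct (rules_for_base (compl a) s hca hs) as [[r [hr [hk' [he ->]]]] | [-> | ->]];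
      try discriminate.
    rewrite <- (compl_involutive a), <- he; apply gt_sim_sup; now apply sup_project_strict.
Qed.

Lemma fresh_ge f : In f (fresh_lits D) -> bound <= atom_of f.
Proof.
  unfold fresh_lits, bound; rewrite in_app_iff, !in_flat_map; intros [[a [ha h]] | [r [hr h]]];
    simpl in h; unfold delta_lit, nodelta_lit, star_lit, win_lit, fresh_atom in h;
    repeat destruct h as [<- | h]; cbn [atom_of compl]; lia || contradiction.
Qed.

Lemma fresh_not_fact f : In f (fresh_lits D) -> ~ In f (facts D'A).
Proof.
  intros hf h; cbn [D'A facts add sim_theory fact_theory] in h; pose proof (fresh_ge f hf).
  assert (hD : in_Sigma D f).
  { apply in_app_or in h as [h | h]; [now left|].
    apply (proj1 Hmod); [now left|]; right; exists (rule_of D RGuard); split; [|now right].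
    cbn [rules sim_theory]; apply in_map, nodup_In, sim_ids_spec, sim_guard. }
  apply sigma_lt in hD; unfold bound in *; lia.
Qed.

Definition auxiliary (f : literal) : Prop := In f (fresh_lits D) /\ forall a, f <> delta_lit D a.

Lemma no_strict_auxiliary f t : auxiliary f -> in_Rs D'A f t -> False.
Proof.
  intros [hf hd] [[ht he] hk]; apply in_sim_rules in ht as [i [hi ->]].
  destruct hi as [r hr _ | a i ha hi | | | | ]; try discriminate hk.
  - apply fresh_ge in hf; pose proof (head_lt D r hr); cbn in he; subst f; unfold bound in *; lia.
  - simpl in hi; repeat destruct hi as [<- | hi]; try discriminate hk; try contradiction.
    now apply (hd a).
Qed.

Lemma auxiliary_no_plus_delta f E : auxiliary f -> T D'A E (Plus, TDelta, f) -> False.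
Proof.
  intros hf [h | [t [ht _]]];
    [now apply (fresh_not_fact f (proj1 hf)) | eapply no_strict_auxiliary; eauto].
Qed.

Lemma auxiliary_iter_no_plus_delta n f : auxiliary f -> iterT D'A n (Plus, TDelta, f) -> False.
Proof. destruct n; [contradiction | apply auxiliary_no_plus_delta]. Qed.

Lemma auxiliary_minus_delta f : auxiliary f -> derives D'A (Minus, TDelta, f).
Proof.
  intros hf; apply derives_of_T; split; [apply (fresh_not_fact f (proj1 hf)) |].
  intros t ht; exfalso; eapply no_strict_auxiliary; eauto.
Qed.

Ltac fresh_lit_in :=
  unfold fresh_lits; apply in_or_app;
  first [ left; apply in_flat_map; eexists; split; [apply in_base_lits; eassumption | simpl; tauto]
        | right; apply in_flat_map; eexists;
          split; [apply filter_In; split; eassumption | simpl; tauto] ].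

Ltac auxiliary_tac :=
  split; [fresh_lit_in | intros b; unfold delta_lit, nodelta_lit, star_lit, win_lit, fresh_atom;
                         cbn [compl]; intros h; injection h; lia].

Lemma auxiliary_nodelta a : atom_of a < bound -> auxiliary (nodelta_lit D a).
Proof. intros; auxiliary_tac. Qed.
Lemma auxiliary_nodelta_compl a : atom_of a < bound -> auxiliary (compl (nodelta_lit D a)).
Proof. intros; split; [fresh_lit_in | discriminate]. Qed.
Lemma auxiliary_star a : atom_of a < bound -> auxiliary (star_lit D a).
Proof. intros; auxiliary_tac. Qed.
Lemma auxiliary_star_compl a : atom_of a < bound -> auxiliary (compl (star_lit D a)).
Proof. intros; split; [fresh_lit_in | discriminate]. Qed.
Lemma auxiliary_win r : In r (rules D) -> is_sd r = true -> auxiliary (win_lit D r).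
Proof. intros; auxiliary_tac. Qed.
Lemma auxiliary_win_compl r : In r (rules D) -> is_sd r = true -> auxiliary (compl (win_lit D r)).
Proof. intros; split; [fresh_lit_in | discriminate]. Qed.

Lemma delta_agree n a : atom_of a < bound ->
  (iterT DA n (Plus, TDelta, a) <-> iterT D'A n (Plus, TDelta, a)) /\
  (iterT DA n (Minus, TDelta, a) <-> iterT D'A n (Minus, TDelta, a)).
Proof.
  revert a; induction n as [|n IH]; intros a ha; [cbn; tauto|].
  cbn [iterT T]; cbn [facts DA D'A add sim_theory fact_theory].
  assert (AP : forall r, In r (rules D) ->
    all_plus (iterT DA n) TDelta (rbody r) <-> all_plus (iterT D'A n) TDelta (rbody r)).
  { intros r hr; split; intros h b hb; apply (IH b (body_lt D r b hr hb)); auto. }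
  assert (SM : forall r, In r (rules D) ->
    some_minus (iterT DA n) TDelta (rbody r) <-> some_minus (iterT D'A n) TDelta (rbody r)).
  { intros r hr; split; intros [b [hb h]]; exists b; split; auto;
      apply (IH b (body_lt D r b hr hb)); auto. }
  assert (strict_copy : forall r, in_Rs DA a r -> in_Rs D'A a (rule_of D (RStrict r)) /\ In r (rules D)).
  { intros r hr; apply in_Rs_add_facts in hr as [[hr1 hr2] hk].
    split; [split; [apply sim_rule_in_R; [now constructor | exact hr2] | reflexivity] | exact hr1]. }
  assert (strict_orig : forall t, in_Rs D'A a t ->
    exists r, in_Rs DA a r /\ In r (rules D) /\ t = rule_of D (RStrict r)).
  { intros t [ht hk]; destruct (rules_for_base a t ha ht) as [[r [hr [hk' [he ->]]]] | [-> | ->]];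
      try discriminate hk.
    exists r; split; [apply in_Rs_add_facts; split; [split|] | split]; auto. }
  split; split.
  - intros [h | [r [hr h]]]; [now left | right].
    destruct (strict_copy r hr) as [h1 h2]; exists (rule_of D (RStrict r)).
    split; auto; now apply (AP r).
  - intros [h | [t [ht h]]]; [now left | right].
    destruct (strict_orig t ht) as [r [h1 [h2 ->]]]; exists r; split; auto; now apply (AP r).
  - intros [hf h]; split; auto; intros t ht.
    destruct (strict_orig t ht) as [r [h1 [h2 ->]]]; apply (SM r); auto.
  - intros [hf h]; split; auto; intros r hr.
    destruct (strict_copy r hr) as [h1 h2]; apply (SM r), (h _ h1); auto.
Qed.

Lemma derives_delta_agree s a : atom_of a < bound ->
  derives DA (s, TDelta, a) <-> derives D'A (s, TDelta, a).
Proof.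
  intros ha; split; intros [n h]; exists n; destruct s; apply (delta_agree n a ha); auto.
Qed.

Lemma in_Rsd_DA a r : in_Rsd DA a r <-> In r (rules D) /\ is_sd r = true /\ rhead r = a.
Proof. unfold DA; rewrite in_Rsd_add_facts, is_sd_spec; unfold in_Rsd, in_R; tauto. Qed.

Section Pair.
Variables d e : tag.
Hypothesis Hde : companion d e.

Definition in_pair (u : tag) : Prop := u = d \/ u = e.

Lemma in_pair_not_delta u : in_pair u -> u <> TDelta.
Proof. intros [-> | ->]; destruct Hde as [[-> ->] | [[-> ->] | [-> ->]]]; discriminate. Qed.

Lemma in_pair_dual u : in_pair u -> exists v, dual_pair d e u v /\ in_pair v.
Proof. intros [-> | ->]; [exists e | exists d]; split; unfold dual_pair, in_pair; auto. Qed.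

Local Notation "⊢ c" := (derives D'A c) (at level 70).

Lemma sim_delta_plus a : atom_of a < bound ->
  ⊢ (Plus, TDelta, a) -> ⊢ (Plus, TDelta, delta_lit D a).
Proof.
  intros ha h; apply derives_of_T; right; exists (rule_of D (RDelta a)).
  split; [split; [apply sim_rule_in_R; [lit_id a | reflexivity] | reflexivity] |].
  now intros b [<- | []].
Qed.

Lemma sim_delta_minus a : atom_of a < bound ->
  ⊢ (Minus, TDelta, a) -> ⊢ (Minus, TDelta, delta_lit D a).
Proof.
  intros ha h; apply derives_of_T; split.
  - apply fresh_not_fact; fresh_lit_in.
  - intros t [ht _]; rewrite (rules_for_delta a t ht); exists a; simpl; auto.
Qed.

Lemma sim_delta_lit_plus a u : in_pair u ->
  ⊢ (Plus, TDelta, delta_lit D a) -> ⊢ (Plus, u, delta_lit D a).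
Proof. intros hu h; apply derives_of_T, plus_of_delta; auto; now apply in_pair_not_delta. Qed.

Lemma sim_delta_lit_minus a u : atom_of a < bound -> in_pair u ->
  ⊢ (Minus, TDelta, delta_lit D a) -> ⊢ (Minus, u, delta_lit D a).
Proof.
  intros ha hu h; destruct (in_pair_dual u hu) as [v [huv _]].
  apply derives_of_T; eapply blocked_minus; eauto; now apply blocked_delta.
Qed.

Lemma sim_nodelta_plus a u v : atom_of a < bound -> dual_pair d e u v ->
  ⊢ (Minus, v, delta_lit D (compl a)) -> ⊢ (Plus, u, nodelta_lit D a).
Proof.
  intros ha huv h; apply derives_of_T; eapply guarded_plus; eauto.
  - now apply guarded_nodelta.
  - now apply auxiliary_minus_delta, auxiliary_nodelta_compl.
  - exists (rule_of D (RNoDelta a)); split; [apply sim_rule_in_R; [lit_id a | reflexivity] |].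
    intros z [].
  - intros s hs; rewrite (rules_for_nodelta_compl a s hs); exists (delta_lit D (compl a)); simpl; auto.
Qed.

Lemma sim_nodelta_minus a u v : atom_of a < bound -> dual_pair d e u v ->
  ⊢ (Plus, v, delta_lit D (compl a)) -> ⊢ (Minus, u, nodelta_lit D a).
Proof.
  intros ha huv h; apply derives_of_T; eapply guarded_minus; eauto.
  - now apply guarded_nodelta.
  - now apply auxiliary_minus_delta, auxiliary_nodelta.
  - right; exists (rule_of D (RNoDeltaBlock a)).
    split; [apply sim_rule_in_R; [lit_id a | reflexivity] |].
    now intros z [<- | []].
Qed.

Lemma sim_star_plus a u : atom_of a < bound -> in_pair u ->
  (⊢ (Plus, u, delta_lit D a) \/
   exists r, In r (rules D) /\ is_sd r = true /\ rhead r = a /\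
     ⊢ (Plus, u, nodelta_lit D a) /\ ⊢ (Plus, u, win_lit D r)) ->
  ⊢ (Plus, u, star_lit D a).
Proof.
  intros ha hu h; destruct (in_pair_dual u hu) as [v [huv _]].
  apply derives_of_T; eapply guarded_plus; eauto.
  - now apply guarded_star.
  - now apply auxiliary_minus_delta, auxiliary_star_compl.
  - destruct h as [h | [r [hr1 [hr2 [<- [h1 h2]]]]]].
    + exists (rule_of D (RStarDelta a)); split; [apply sim_rule_in_R; [lit_id a | reflexivity] |].
      now intros z [<- | []].
    + exists (rule_of D (RStarWin r)); split; [apply sim_rule_in_R; [now constructor | reflexivity] |].
      now intros z [<- | [<- | []]].
  - intros s hs; destruct (rules_for_star_compl a s hs).
Qed.

Lemma sim_star_minus a u : atom_of a < bound -> in_pair u ->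
  ⊢ (Minus, u, delta_lit D a) ->
  (forall r, In r (rules D) -> is_sd r = true -> rhead r = a ->
     ⊢ (Minus, u, nodelta_lit D a) \/ ⊢ (Minus, u, win_lit D r)) ->
  ⊢ (Minus, u, star_lit D a).
Proof.
  intros ha hu h1 h2; destruct (in_pair_dual u hu) as [v [huv _]].
  apply derives_of_T; eapply guarded_minus; eauto.
  - now apply guarded_star.
  - now apply auxiliary_minus_delta, auxiliary_star.
  - left; intros t ht; destruct (rules_for_star a t ha ht) as [-> | [r [r1 [r2 [r3 ->]]]]].
    + exists (delta_lit D a); simpl; auto.
    + cbn [rule_of rbody]; rewrite r3.
      destruct (h2 r r1 r2 r3); [exists (nodelta_lit D a) | exists (win_lit D r)]; simpl; auto.
Qed.

Lemma sim_win_plus r u v : In r (rules D) -> is_sd r = true -> dual_pair d e u v ->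
  (forall b, In b (rbody r) -> ⊢ (Plus, u, star_lit D b)) ->
  (forall s, In s (rules D) -> rhead s = compl (rhead r) -> ~ gt D r s ->
     exists c, In c (rbody s) /\ ⊢ (Minus, v, star_lit D c)) ->
  ⊢ (Plus, u, win_lit D r).
Proof.
  intros hr hsd huv h1 h2; apply derives_of_T; eapply guarded_plus; eauto.
  - now apply guarded_win.
  - now apply auxiliary_minus_delta, auxiliary_win_compl.
  - exists (rule_of D (RWin r)); split; [apply sim_rule_in_R; [now constructor | reflexivity] |].
    intros z hz; apply in_map_iff in hz as [b [<- hb]]; auto.
  - intros s' hs'; destruct (rules_for_win_compl r s' hr hs') as [s [s1 [s2 [s3 ->]]]].
    destruct (h2 s s1 s2 s3) as [c [hc hc']]; exists (star_lit D c); split; auto.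
    now apply in_map.
Qed.

Lemma sim_win_minus r u v : In r (rules D) -> is_sd r = true -> dual_pair d e u v ->
  ((exists b, In b (rbody r) /\ ⊢ (Minus, u, star_lit D b)) \/
   (exists s, In s (rules D) /\ rhead s = compl (rhead r) /\ ~ gt D r s /\
      forall c, In c (rbody s) -> ⊢ (Plus, v, star_lit D c))) ->
  ⊢ (Minus, u, win_lit D r).
Proof.
  intros hr hsd huv h; apply derives_of_T; eapply guarded_minus; eauto.
  - now apply guarded_win.
  - now apply auxiliary_minus_delta, auxiliary_win.
  - destruct h as [[b [hb h]] | [s [s1 [s2 [s3 h]]]]].
    + left; intros t ht; rewrite (rules_for_win r t hr ht).
      exists (star_lit D b); split; auto; now apply in_map.
    + right; exists (rule_of D (RAttack r s)).
      split; [apply sim_rule_in_R; [now constructor | reflexivity] |].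
      intros z hz; apply in_map_iff in hz as [c [<- hc]]; auto.
Qed.

Lemma sim_base_plus a : atom_of a < bound ->
  ⊢ (Plus, d, star_lit D a) -> ⊢ (Minus, TDelta, compl a) -> ⊢ (Minus, e, star_lit D (compl a)) ->
  ⊢ (Plus, d, a).
Proof.
  intros ha h1 h2 h3; apply derives_of_T; eapply projected_plus; eauto; now apply projected_base.
Qed.

Lemma sim_base_minus a : atom_of a < bound ->
  ⊢ (Minus, TDelta, a) -> ⊢ (Minus, d, star_lit D a) \/ ⊢ (Plus, TDelta, compl a) ->
  ⊢ (Minus, d, a).
Proof. intros ha h1 h2; apply derives_of_T; eapply projected_minus; eauto; now apply projected_base. Qed.

Lemma delta_transfer n s a : atom_of a < bound -> iterT DA n (s, TDelta, a) -> ⊢ (s, TDelta, a).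
Proof. intros ha h; apply derives_delta_agree; auto; now exists n. Qed.

Definition star_complete (n : nat) (a : literal) : Prop :=
  (iterT DA n (Plus, TPartialStar, a) ->
     (forall u, in_pair u -> ⊢ (Plus, u, star_lit D a)) /\ ⊢ (Plus, d, a)) /\
  (iterT DA n (Minus, TPartialStar, a) ->
     (forall u, in_pair u -> ⊢ (Minus, u, star_lit D a)) /\ ⊢ (Minus, d, a)).

Section Forward.
Variable n : nat.
Hypothesis IH : forall a, atom_of a < bound -> star_complete n a.

Let d_in_pair : in_pair d. Proof. now left. Qed.
Let e_in_pair : in_pair e. Proof. now right. Qed.

Let IH_plus r b u : In r (rules D) -> In b (rbody r) -> in_pair u ->
  iterT DA n (Plus, TPartialStar, b) -> ⊢ (Plus, u, star_lit D b).
Proof. intros hr hb hu h; now apply (proj1 (IH b (body_lt D r b hr hb)) h). Qed.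

Let IH_minus r b u : In r (rules D) -> In b (rbody r) -> in_pair u ->
  iterT DA n (Minus, TPartialStar, b) -> ⊢ (Minus, u, star_lit D b).
Proof. intros hr hb hu h; now apply (proj2 (IH b (body_lt D r b hr hb)) h). Qed.

Lemma complete_plus_step a : atom_of a < bound -> T DA (iterT DA n) (Plus, TPartialStar, a) ->
  (forall u, in_pair u -> ⊢ (Plus, u, star_lit D a)) /\ ⊢ (Plus, d, a).
Proof.
  intros ha [h | [r [hr [hb [hdn hs]]]]].
  { apply (delta_transfer n) in h; auto; split.
    - intros u hu; apply sim_star_plus; auto; left; apply sim_delta_lit_plus, sim_delta_plus; auto.
    - apply derives_of_T, plus_of_delta; auto; now apply in_pair_not_delta. }
  assert (hca : atom_of (compl a) < bound) by now rewrite atom_of_compl.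
  apply in_Rsd_DA in hr as [r1 [r2 <-]].
  apply (delta_transfer n) in hdn; auto.
  assert (hN : forall u, in_pair u -> ⊢ (Plus, u, nodelta_lit D (rhead r))).
  { intros u hu; destruct (in_pair_dual u hu) as [v [huv hv]].
    eapply sim_nodelta_plus; eauto; apply sim_delta_lit_minus, sim_delta_minus; auto. }
  assert (hW : forall u, in_pair u -> ⊢ (Plus, u, win_lit D r)).
  { intros u hu; destruct (in_pair_dual u hu) as [v [huv hv]].
    apply (sim_win_plus r u v); auto.
    - intros b hb'; eapply IH_plus; eauto.
    - intros s s1 s2 s3; destruct (hs s) as [[c [hc hc']] | g].
      + apply in_R_add_facts; split; auto.
      + exists c; split; auto; eapply IH_minus; eauto.
      + now apply gt_add_facts in g. }
  assert (hX : forall u, in_pair u -> ⊢ (Plus, u, star_lit D (rhead r)))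
    by (intros u hu; apply sim_star_plus; auto; right; exists r; repeat split; auto).
  split; auto; apply sim_base_plus; auto.
  (* A rule for [~a] that [r] does not override has a refuted body; the others
     are attacked by [r] itself. *)
  apply sim_star_minus; auto; [apply sim_delta_lit_minus, sim_delta_minus; auto |].
  intros r' q1 q2 q3; right; apply (sim_win_minus r' e d); auto; [now right |].
  destruct (hs r') as [[c [hc hc']] | g].
  - apply in_R_add_facts; split; auto.
  - left; exists c; split; auto; eapply IH_minus; eauto.
  - right; exists r; apply gt_add_facts in g.
    split; [auto | split; [now rewrite q3, compl_involutive |]].
    split; [now apply gt_asym | intros c hc; apply (IH_plus r); auto; now apply hb].
Qed.

Lemma complete_minus_step a : atom_of a < bound -> T DA (iterT DA n) (Minus, TPartialStar, a) ->
  (forall u, in_pair u -> ⊢ (Minus, u, star_lit D a)) /\ ⊢ (Minus, d, a).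
Proof.
  intros ha [hd h]; apply (delta_transfer n) in hd; auto.
  assert (hX : forall u, in_pair u -> ⊢ (Minus, u, star_lit D a)).
  { intros u hu; destruct (in_pair_dual u hu) as [v [huv hv]].
    apply sim_star_minus; auto; [apply sim_delta_lit_minus, sim_delta_minus; auto |].
    intros r r1 r2 r3; destruct (h r) as [[b [hb hb']] | [x | [s [hs1 [hs2 hs3]]]]].
    - apply in_Rsd_DA; auto.
    - right; eapply sim_win_minus; eauto; left; exists b; split; auto; eapply IH_minus; eauto.
    - assert (hca : atom_of (compl a) < bound) by now rewrite atom_of_compl.
      left; eapply sim_nodelta_minus; eauto.
      apply sim_delta_lit_plus, sim_delta_plus, (delta_transfer n); auto.
    - right; eapply sim_win_minus; eauto; right; apply in_R_add_facts in hs1 as [hs1 hs1'].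
      exists s; split; [auto | split; [now rewrite hs1', r3 | split]].
      + now rewrite <- gt_add_facts with (F := FA).
      + intros c hc; eapply IH_plus; eauto. }
  split; auto; apply sim_base_minus; auto.
Qed.

End Forward.

Lemma star_complete_all n a : atom_of a < bound -> star_complete n a.
Proof.
  revert a; induction n as [|n IH]; intros a ha; [split; contradiction |].
  split; [apply complete_plus_step | apply complete_minus_step]; auto.
Qed.

Record faithful (E : cset) : Prop := {
  faithful_delta : forall s a, atom_of a < bound -> E (s, TDelta, a) -> derives DA (s, TDelta, a);
  faithful_plus : forall a, atom_of a < bound -> E (Plus, d, a) -> derives DA (Plus, TPartialStar, a);
  faithful_minus : forall a, atom_of a < bound -> E (Minus, d, a) -> derives DA (Minus, TPartialStar, a);
  faithful_delta_lit_plus : forall a u, atom_of a < bound -> u = TDelta \/ in_pair u ->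
    E (Plus, u, delta_lit D a) -> derives DA (Plus, TDelta, a);
  faithful_delta_lit_minus : forall a u, atom_of a < bound -> u = TDelta \/ in_pair u ->
    E (Minus, u, delta_lit D a) -> derives DA (Minus, TDelta, a);
  faithful_nodelta_plus : forall a u, atom_of a < bound -> in_pair u ->
    E (Plus, u, nodelta_lit D a) -> derives DA (Minus, TDelta, compl a);
  faithful_nodelta_minus : forall a u, atom_of a < bound -> in_pair u ->
    E (Minus, u, nodelta_lit D a) -> derives DA (Plus, TDelta, compl a);
  faithful_star_plus : forall a u, atom_of a < bound -> in_pair u ->
    E (Plus, u, star_lit D a) -> derives DA (Plus, TPartialStar, a);
  faithful_star_minus : forall a u, atom_of a < bound -> in_pair u ->
    E (Minus, u, star_lit D a) -> derives DA (Minus, TPartialStar, a);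
  faithful_win_plus : forall r u, In r (rules D) -> is_sd r = true -> in_pair u ->
    E (Plus, u, win_lit D r) -> wins DA r;
  faithful_win_minus : forall r u, In r (rules D) -> is_sd r = true -> in_pair u ->
    E (Minus, u, win_lit D r) -> loses DA r }.

Section Backward.
Variable n : nat.
Let E := iterT D'A n.
Hypothesis IH : faithful E.

Let no_plus_delta f : auxiliary f -> E (Plus, TDelta, f) -> False.
Proof. apply auxiliary_iter_no_plus_delta. Qed.

Lemma sound_delta_lit_plus a u : atom_of a < bound -> u = TDelta \/ in_pair u ->
  T D'A E (Plus, u, delta_lit D a) -> derives DA (Plus, TDelta, a).
Proof.
  intros ha [-> | hu].
  - intros [h | [t [[[ht he] hk] hb]]].
    + exfalso; revert h; apply fresh_not_fact; fresh_lit_in.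
    + rewrite (rules_for_delta a t (conj ht he)) in hb.
      apply (faithful_delta _ IH); auto; apply hb; now left.
  - destruct (in_pair_dual u hu) as [v [huv _]]; intros h.
    apply (blocked_plus_inv d e u v Hde huv _ _ _ _ (blocked_delta a ha)) in h.
    apply (faithful_delta_lit_plus _ IH a TDelta); auto.
Qed.

Lemma sound_delta_lit_minus a u : atom_of a < bound -> u = TDelta \/ in_pair u ->
  T D'A E (Minus, u, delta_lit D a) -> derives DA (Minus, TDelta, a).
Proof.
  intros ha [-> | hu].
  - intros [_ h]; destruct (h (rule_of D (RDelta a))) as [b [[<- | []] hb]].
    + split; [apply sim_rule_in_R; [lit_id a | reflexivity] | reflexivity].
    + now apply (faithful_delta _ IH).
  - intros h; apply delta_of_minus in h; [|now apply in_pair_not_delta].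
    apply (faithful_delta_lit_minus _ IH a TDelta); auto.
Qed.

Lemma sound_nodelta_plus a u : atom_of a < bound -> in_pair u ->
  T D'A E (Plus, u, nodelta_lit D a) -> derives DA (Minus, TDelta, compl a).
Proof.
  intros ha hu h; destruct (in_pair_dual u hu) as [v [huv hv]].
  assert (hca : atom_of (compl a) < bound) by now rewrite atom_of_compl.
  destruct (guarded_plus_inv d e u v Hde huv _ _ _ (guarded_nodelta a ha) h) as [x | [_ x]].
  - destruct (no_plus_delta _ (auxiliary_nodelta a ha) x).
  - destruct (x (rule_of D (RNoDeltaBlock a))) as [b [[<- | []] hb]].
    + apply sim_rule_in_R; [lit_id a | reflexivity].
    + apply (faithful_delta_lit_minus _ IH (compl a) v); auto.
Qed.

Lemma sound_nodelta_minus a u : atom_of a < bound -> in_pair u ->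
  T D'A E (Minus, u, nodelta_lit D a) -> derives DA (Plus, TDelta, compl a).
Proof.
  intros ha hu h; destruct (in_pair_dual u hu) as [v [huv hv]].
  assert (hca : atom_of (compl a) < bound) by now rewrite atom_of_compl.
  destruct (guarded_minus_inv d e u v Hde huv _ _ _ (guarded_nodelta a ha) h)
    as [_ [x | [x | [s' [hs x]]]]].
  - destruct (x (rule_of D (RNoDelta a))) as [b [[] _]].
    apply sim_rule_in_R; [lit_id a | reflexivity].
  - destruct (no_plus_delta _ (auxiliary_nodelta_compl a ha) x).
  - rewrite (rules_for_nodelta_compl a s' hs) in x.
    apply (faithful_delta_lit_plus _ IH (compl a) v); auto; apply x; now left.
Qed.

Lemma sound_star_plus a u : atom_of a < bound -> in_pair u ->
  T D'A E (Plus, u, star_lit D a) -> derives DA (Plus, TPartialStar, a).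
Proof.
  intros ha hu h; destruct (in_pair_dual u hu) as [v [huv hv]].
  destruct (guarded_plus_inv d e u v Hde huv _ _ _ (guarded_star a ha) h) as [x | [[t [ht x]] _]].
  - destruct (no_plus_delta _ (auxiliary_star a ha) x).
  - destruct (rules_for_star a t ha ht) as [-> | [r [r1 [r2 [<- ->]]]]].
    + apply star_of_delta, (faithful_delta_lit_plus _ IH a u); auto; apply x; now left.
    + apply star_of_wins.
      * apply in_Rsd_DA; auto.
      * apply (faithful_win_plus _ IH r u); auto; apply x; simpl; auto.
      * apply (faithful_nodelta_plus _ IH (rhead r) u); auto; apply x; now left.
Qed.

Lemma sound_star_minus a u : atom_of a < bound -> in_pair u ->
  T D'A E (Minus, u, star_lit D a) -> derives DA (Minus, TPartialStar, a).
Proof.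
  intros ha hu h; destruct (in_pair_dual u hu) as [v [huv hv]].
  destruct (guarded_minus_inv d e u v Hde huv _ _ _ (guarded_star a ha) h)
    as [_ [x | [x | [s' [hs x]]]]].
  - apply neg_star_of_loses.
    + destruct (x (rule_of D (RStarDelta a))) as [b [[<- | []] hb]];
        [apply sim_rule_in_R; [lit_id a | reflexivity] |].
      apply (faithful_delta_lit_minus _ IH a u); auto.
    + intros r hr; apply in_Rsd_DA in hr as [r1 [r2 r3]].
      destruct (x (rule_of D (RStarWin r))) as [b [hb hb']].
      * apply sim_rule_in_R; [now constructor | cbn; now rewrite r3].
      * cbn in hb; rewrite r3 in hb; destruct hb as [<- | [<- | []]].
        -- left; now apply (faithful_nodelta_minus _ IH a u).
        -- right; now apply (faithful_win_minus _ IH r u).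
  - destruct (no_plus_delta _ (auxiliary_star_compl a ha) x).
  - destruct (rules_for_star_compl a s' hs).
Qed.

Lemma sound_win_plus r u : In r (rules D) -> is_sd r = true -> in_pair u ->
  T D'A E (Plus, u, win_lit D r) -> wins DA r.
Proof.
  intros hr hsd hu h; destruct (in_pair_dual u hu) as [v [huv hv]].
  destruct (guarded_plus_inv d e u v Hde huv _ _ _ (guarded_win r hr hsd) h) as [x | [[t [ht x]] y]].
  - destruct (no_plus_delta _ (auxiliary_win r hr hsd) x).
  - rewrite (rules_for_win r t hr ht) in x; split.
    + intros b hb; apply (faithful_star_plus _ IH b u); auto; [apply (body_lt D r b hr hb) |].
      apply x, in_map; auto.
    + intros s hs hg; apply in_R_add_facts in hs as [s1 s2].
      assert (hg' : ~ gt D r s) by (contradict hg; now apply gt_add_facts).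
      destruct (y (rule_of D (RAttack r s))) as [z [hz hz']].
      * apply sim_rule_in_R; [now constructor | reflexivity].
      * cbn in hz; apply in_map_iff in hz as [c [<- hc]].
        exists c; split; auto; apply (faithful_star_minus _ IH c v); auto.
        apply (body_lt D s c s1 hc).
Qed.

Lemma sound_win_minus r u : In r (rules D) -> is_sd r = true -> in_pair u ->
  T D'A E (Minus, u, win_lit D r) -> loses DA r.
Proof.
  intros hr hsd hu h; destruct (in_pair_dual u hu) as [v [huv hv]].
  destruct (guarded_minus_inv d e u v Hde huv _ _ _ (guarded_win r hr hsd) h)
    as [_ [x | [x | [s' [hs x]]]]].
  - left; destruct (x (rule_of D (RWin r))) as [z [hz hz']].
    + apply sim_rule_in_R; [now constructor | reflexivity].
    + cbn in hz; apply in_map_iff in hz as [b [<- hb]].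
      exists b; split; auto; apply (faithful_star_minus _ IH b u); auto; apply (body_lt D r b hr hb).
  - destruct (no_plus_delta _ (auxiliary_win_compl r hr hsd) x).
  - right; destruct (rules_for_win_compl r s' hr hs) as [s [s1 [s2 [s3 ->]]]].
    exists s; split; [apply in_R_add_facts; split; auto |].
    split; [contradict s3; now apply gt_add_facts in s3 |].
    intros c hc; apply (faithful_star_plus _ IH c v); auto; [apply (body_lt D s c s1 hc) |].
    apply x; cbn; now apply in_map.
Qed.

Lemma sound_base_plus a : atom_of a < bound ->
  T D'A E (Plus, d, a) -> derives DA (Plus, TPartialStar, a).
Proof.
  intros ha h; destruct (projected_plus_inv d e _ _ _ _ _ _ _ _ Hde (projected_base a ha) h) as [x | x].
  - now apply star_of_delta, (faithful_delta _ IH).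
  - apply (faithful_star_plus _ IH a d); auto; now left.
Qed.

Lemma sound_base_minus a : atom_of a < bound ->
  T D'A E (Minus, d, a) -> derives DA (Minus, TPartialStar, a).
Proof.
  intros ha h; assert (hca : atom_of (compl a) < bound) by now rewrite atom_of_compl.
  destruct (projected_minus_inv d e _ _ _ _ _ _ _ _ Hde (projected_base a ha) h) as [h0 [x | [x | x]]];
    apply (faithful_delta _ IH) in h0; auto.
  - apply (faithful_star_minus _ IH a d); auto; now left.
  - apply neg_star_of_loses; auto; intros; left; now apply (faithful_delta _ IH).
  - apply neg_star_of_compl; auto; [now apply wf_add_facts |].
    apply (faithful_star_plus _ IH (compl a) e); auto; now right.
Qed.

End Backward.

Lemma faithful_iter n : faithful (iterT D'A n).
Proof.
  induction n as [|n IH]; [split; contradiction |].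
  split; intros *.
  - intros ha h; destruct s; apply derives_delta_agree; auto; now exists (S n).
  - now apply sound_base_plus.
  - now apply sound_base_minus.
  - now apply sound_delta_lit_plus.
  - now apply sound_delta_lit_minus.
  - now apply sound_nodelta_plus.
  - now apply sound_nodelta_minus.
  - now apply sound_star_plus.
  - now apply sound_star_minus.
  - now apply sound_win_plus.
  - now apply sound_win_minus.
Qed.

Lemma simulation_correct q : in_Sigma DA q ->
  (derives DA (Plus, TPartialStar, q) <-> derives D'A (Plus, d, q)) /\
  (derives DA (Minus, TPartialStar, q) <-> derives D'A (Minus, d, q)).
Proof.
  intros hq; destruct (classic (In q FA)) as [hf | hf].
  - assert (hDA : In q (facts DA)) by (apply in_or_app; now right).
    assert (hD'A : In q (facts D'A)) by (apply in_or_app; now right).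
    split; split; intros h; try (exfalso; revert h; now apply no_minus_of_fact).
    + apply derives_of_T, plus_of_delta; [apply in_pair_not_delta; now left |].
      apply derives_of_T; now left.
    + apply star_of_delta, derives_of_T; now left.
  - assert (ha : atom_of q < bound) by (apply sigma_lt, (in_Sigma_add_facts D FA); auto).
    split; split; intros [n h].
    + now apply (star_complete_all n q ha).
    + now apply (faithful_plus _ (faithful_iter n)).
    + now apply (star_complete_all n q ha).
    + now apply (faithful_minus _ (faithful_iter n)).
Qed.

End Pair.
End Correspondence.

Theorem theorem8 :
  forall d : tag, d = TDelta_ \/ d = TDeltaStar \/ d = TPartial ->
  forall D : theory, wf_theory D ->
  exists D' : theory, wf_theory D' /\
    forall FA : list literal,
      modular D D' (fact_theory FA) ->
      forall q : literal, in_Sigma (add D (fact_theory FA)) q ->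
        (derives (add D (fact_theory FA)) (Plus, TPartialStar, q) <->
         derives (add D' (fact_theory FA)) (Plus, d, q)) /\
        (derives (add D (fact_theory FA)) (Minus, TPartialStar, q) <->
         derives (add D' (fact_theory FA)) (Minus, d, q)).
Proof.
  intros d Hd D wfD; exists (sim_theory D); split; [now apply wf_sim_theory |].
  intros FA Hmod q hq.
  assert (He : exists e, companion d e)
    by (unfold companion; destruct Hd as [-> | [-> | ->]]; eauto).
  destruct He as [e He]; exact (simulation_correct D FA wfD Hmod d e He q hq).
Qed.
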